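(* Let $(\mathcal L,\mathcal M,\mathcal P)$ be a solution of the dispersionless $N$-modified KP hierarchy, with $v_m$ the coefficients of $\mathcal M$. Then $\mathcal P$ has the following expansion in powers of $\mathcal L$: \[ \mathcal P=\mathcal L^N\exp\Bigl(\sum_{m\ge1}\frac{-1}{m}\frac{\partial v_m}{\partial s}\mathcal L^{-m}\Bigr). \]
   Context: Fix a positive integer $N$. Let $x,s$ be variables and $t=(t_1,t_2,\dots)$. Consider formal Laurent series in $k$ with coefficients depending on $(x,t,s)$: $\mathcal L=k+\sum_{n\ge2}u_n(t;s)k^{1-n}$, $\mathcal M=\sum_{n\ge1}nt_n\mathcal L^{n-1}+x+Ns\mathcal L^{-1}+\sum_{i\ge1}v_i(t;s)\mathcal L^{-i-1}$, and the polynomial $\mathcal P=k^N+p_{N-1}k^{N-1}+\dots+p_0$. The Poisson bracket is $\{F,G\}=\frac{\partial F}{\partial k}\frac{\partial G}{\partial x}-\frac{\partial F}{\partial x}\frac{\partial G}{\partial k}$. For a Laurent series in $k$, $(\cdot)_{\ge0}$ is the polynomial part and $(\cdot)_{<0}$ the part with negative powers; $\mathcal B_n=(\mathcal L^n)_{\ge0}$. The dispersionless $N$-modified KP hierarchy is the system: $\partial\mathcal L/\partial t_n=\{\mathcal B_n,\mathcal L\}$, $\partial\mathcal M/\partial t_n=\{\mathcal B_n,\mathcal M\}$ ($n\ge1$), $\{\mathcal L,\mathcal M\}=1$, $(\partial\mathcal L/\partial s)\mathcal P=\{\mathcal P,\mathcal L\}$, $(\partial\mathcal M/\partial s)\mathcal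 P=\{\mathcal P,\mathcal M\}$, $-(\partial\mathcal B_n/\partial s)\mathcal P=-\partial\mathcal P/\partial t_n-\{\mathcal P,\mathcal B_n\}$ ($n\ge1$). *)

From Stdlib Require Import Reals ZArith.
From Coquelicot Require Import Coquelicot.
Open Scope R_scope.

(* Formal Laurent series in k (at a fixed point (x,t,s)):             *)
(* f : Z -> R, f j = coefficient of k^j.  All series used below have   *)
(* support bounded above, so every sum written with Series is a sum of *)
(* an eventually-zero sequence, i.e. a genuine finite sum.             *)
Definition ser := Z -> R.

Definition addS (f g : ser) : ser := fun j => f j + g j.
Definition oppS (f : ser) : ser := fun j => - f j.
Definition subS (f g : ser) : ser := fun j => f j - g j.
Definition scalS (c : R) (f : ser) : ser := fun j => c * f j.
Definition oneS : ser := fun j => if Z.eqb j 0 then 1 else 0.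
Definition kS : ser := fun j => if Z.eqb j 1 then 1 else 0.

(* Cauchy product: (f g)_j = sum_{a in Z} f_a g_{j-a}, split as a >= 0 and a < 0. *)
Definition mulS (f g : ser) : ser := fun j =>
  Series (fun n => f (Z.of_nat n) * g (j - Z.of_nat n)%Z) +
  Series (fun n => f (- Z.of_nat n - 1)%Z * g (j + Z.of_nat n + 1)%Z).

Fixpoint powS (f : ser) (n : nat) : ser :=
  match n with O => oneS | S m => mulS f (powS f m) end.

Definition sumS (F : nat -> ser) : ser := fun j => Series (fun m => F m j).

Definition shiftS (d : Z) (f : ser) : ser := fun j => f (j - d)%Z.

(* Inverse of a series of the form L = k + (terms of degree <= 0):
   L = k (1 + w), w = k^{-1}(L - k),  L^{-1} = k^{-1} sum_m (-w)^m. *)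
Definition invS (L : ser) : ser :=
  let w := shiftS (-1) (subS L kS) in
  shiftS (-1) (sumS (fun m => powS (oppS w) m)).

Definition zpowS (L : ser) (n : Z) : ser :=
  match n with
  | Z0 => oneS
  | Zpos q => powS L (Pos.to_nat q)
  | Zneg q => powS (invS L) (Pos.to_nat q)
  end.

Definition posPart (f : ser) : ser := fun j => if Z.leb 0 j then f j else 0.

Definition dkS (f : ser) : ser := fun j => IZR (j + 1) * f (j + 1)%Z.

(* exponential of a series of degree <= -1 *)
Definition expS (E : ser) : ser :=
  sumS (fun j => scalS (/ INR (fact j)) (powS E j)).

(* Coefficients depending on (x, t, s), t = (t_1, t_2, ...) : nat -> R *)
(* (the entry t 0 is unused).                                          *)
Definition coef := R -> (nat -> R) -> R -> R.
Definition fser := R -> (nat -> R) -> R -> ser.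

Definition upd (t : nat -> R) (n : nat) (h : R) : nat -> R :=
  fun m => if Nat.eqb m n then h else t m.

Definition finsupp (t : nat -> R) : Prop :=
  exists K : nat, forall n, (K < n)%nat -> t n = 0.

Definition dxC (c : coef) : coef := fun x t s => Derive (fun y => c y t s) x.
Definition dsC (c : coef) : coef := fun x t s => Derive (fun y => c x t y) s.
Definition dtC (n : nat) (c : coef) : coef :=
  fun x t s => Derive (fun h => c x (upd t n h) s) (t n).

Definition dxF (F : fser) : fser := fun x t s j => Derive (fun y => F y t s j) x.
Definition dsF (F : fser) : fser := fun x t s j => Derive (fun y => F x t y j) s.
Definition dtF (n : nat) (F : fser) : fser :=
  fun x t s j => Derive (fun h => F x (upd t n h) s j) (t n).

Definition bracket (F G : fser) : fser := fun x t s =>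
  subS (mulS (dkS (F x t s)) (dxF G x t s)) (mulS (dxF F x t s) (dkS (G x t s))).

(* L = k + sum_{n>=2} u_n k^{1-n} *)
Definition Lfield (u : nat -> coef) : fser := fun x t s j =>
  if Z.eqb j 1 then 1
  else if Z.leb j (-1) then u (Z.to_nat (1 - j)) x t s
  else 0.

(* P = k^N + p_{N-1} k^{N-1} + ... + p_0 *)
Definition Pfield (N : nat) (p : nat -> coef) : fser := fun x t s j =>
  if Z.eqb j (Z.of_nat N) then 1
  else if andb (Z.leb 0 j) (Z.ltb j (Z.of_nat N)) then p (Z.to_nat j) x t s
  else 0.

(* M = sum_{n>=1} n t_n L^{n-1} + x + N s L^{-1} + sum_{i>=1} v_i L^{-i-1} *)
Definition Mfield (N : nat) (u v : nat -> coef) : fser := fun x t s =>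
  let L := Lfield u x t s in
  addS (sumS (fun n => scalS (INR n * t n) (zpowS L (Z.of_nat n - 1))))
   (addS (scalS x oneS)
    (addS (scalS (INR N * s) (invS L))
          (sumS (fun i => scalS (v (S i) x t s) (zpowS L (- Z.of_nat (S i) - 1)))))).

Definition Bfield (u : nat -> coef) (n : nat) : fser := fun x t s =>
  posPart (powS (Lfield u x t s) n).

(* regularity: differentiable in each variable (implicit in the paper) *)
Definition regular (c : coef) : Prop :=
  forall x t s, finsupp t ->
    ex_derive (fun y => c y t s) x /\ ex_derive (fun y => c x t y) s /\
    forall n, ex_derive (fun h => c x (upd t n h) s) (t n).

Definition dNmKP_solution (N : nat) (u v p : nat -> coef) : Prop :=
  let L := Lfield u in
  let M := Mfield N u v in
  let P := Pfield N p in
  forall x t s, finsupp t ->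
    (forall n, (1 <= n)%nat -> dtF n L x t s = bracket (Bfield u n) L x t s) /\
    (forall n, (1 <= n)%nat -> dtF n M x t s = bracket (Bfield u n) M x t s) /\
    bracket L M x t s = oneS /\
    mulS (dsF L x t s) (P x t s) = bracket P L x t s /\
    mulS (dsF M x t s) (P x t s) = bracket P M x t s /\
    (forall n, (1 <= n)%nat ->
       oppS (mulS (dsF (Bfield u n) x t s) (P x t s))
       = subS (oppS (dtF n P x t s)) (bracket P (Bfield u n) x t s)).

From Stdlib Require Import Reals ZArith Lia Lra List FunctionalExtensionality ProofIrrelevance.
From Coquelicot Require Import Coquelicot.
Open Scope R_scope.

(* Put H := L_k M_s - L_s M_k. Multiplying {L, M} = 1 by P_k and using L_s P = {P, L} and
   M_s P = {P, M} gives P_k = P H. Since M = sum_n n t_n L^(n-1) + x + N s L^(-1) + sum_i v_i L^(-i-1),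
   the variation of M through L cancels in H, so H = L_k (N L^(-1) + sum_m (dv_m/ds) L^(-m-1)).
   The series Q = L^N exp(sum_m -(1/m)(dv_m/ds) L^(-m)) has the same logarithmic k-derivative, so
   P_k Q = Q_k P. Both are monic of degree N in k, and this forces P = Q. *)

Definition zsum (F : Z -> R) (l : list Z) : R := fold_right (fun a r => F a + r) 0 l.

Lemma zsum_app F l1 l2 : zsum F (l1 ++ l2) = zsum F l1 + zsum F l2.
Proof. induction l1; simpl; [lra|]. unfold zsum in *; simpl. rewrite IHl1. lra. Qed.

Lemma zsum_ext F G l : (forall a, In a l -> F a = G a) -> zsum F l = zsum G l.
Proof.
  induction l as [|a l IH]; intros H; simpl; auto. unfold zsum in *; simpl.
  rewrite H by (simpl; auto). rewrite IH; auto. intros b Hb. apply H. simpl; auto.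
Qed.

Lemma zsum_plus F G l : zsum (fun a => F a + G a) l = zsum F l + zsum G l.
Proof. induction l; unfold zsum in *; simpl; [lra|]. rewrite IHl; lra. Qed.

Lemma zsum_scal c F l : zsum (fun a => c * F a) l = c * zsum F l.
Proof. induction l; unfold zsum in *; simpl; [lra|]. rewrite IHl; lra. Qed.

Lemma zsum_zero F l : (forall a, In a l -> F a = 0) -> zsum F l = 0.
Proof.
  intros H. rewrite (zsum_ext F (fun _ => 0)) by auto. clear H.
  induction l; unfold zsum in *; simpl; auto. rewrite IHl. lra.
Qed.

Lemma zsum_map F g l : zsum F (map g l) = zsum (fun a => F (g a)) l.
Proof. induction l; unfold zsum in *; simpl; auto. rewrite IHl; auto. Qed.

Lemma zsum_swap (F : Z -> Z -> R) l1 l2 :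
  zsum (fun a => zsum (fun b => F a b) l2) l1 = zsum (fun b => zsum (fun a => F a b) l1) l2.
Proof.
  induction l1 as [|a l1 IH]; simpl.
  - symmetry. apply zsum_zero. reflexivity.
  - change (zsum (fun b => F a b) l2 + zsum (fun a => zsum (fun b => F a b) l2) l1
      = zsum (fun b => F a b + zsum (fun a => F a b) l1) l2).
    rewrite IH, zsum_plus. reflexivity.
Qed.

Lemma zsum_remove F a l : NoDup l -> In a l ->
  zsum F l = F a + zsum F (remove Z.eq_dec a l).
Proof.
  induction l as [|b l IH]; intros Hn Hi; [destruct Hi|]. inversion Hn; subst.
  simpl remove. destruct (Z.eq_dec a b) as [<-|hab].
  - rewrite notin_remove by auto. reflexivity.
  - destruct Hi as [->|Hi]; [congruence|]. simpl. rewrite (IH H2 Hi). lra.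
Qed.

Lemma NoDup_remove_Z a l : NoDup l -> NoDup (remove Z.eq_dec a l).
Proof.
  induction l as [|b l IH]; intros H; simpl; auto. inversion H; subst.
  destruct (Z.eq_dec a b); auto. constructor; auto.
  intros Hi. apply in_remove in Hi. tauto.
Qed.

Lemma zsum_support F l1 l2 : NoDup l1 -> NoDup l2 ->
  (forall a, F a <> 0 -> (In a l1 <-> In a l2)) -> zsum F l1 = zsum F l2.
Proof.
  revert l2; induction l1 as [|a l1 IH]; intros l2 H1 H2 H.
  - symmetry. apply zsum_zero. intros b Hb.
    destruct (Req_dec (F b) 0) as [|Hn]; auto. apply H in Hn. apply Hn in Hb. destruct Hb.
  - inversion H1; subst. simpl. destruct (in_dec Z.eq_dec a l2) as [Hi|Hi].
    + rewrite (zsum_remove F a l2 H2 Hi). f_equal. apply IH; auto using NoDup_remove_Z.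
      intros b Hb. specialize (H b Hb). split.
      * intros Hb1. apply in_in_remove; [intros ->; tauto|]. apply H. simpl; auto.
      * intros Hb2. apply in_remove in Hb2 as [Hb2 Hne]. apply H in Hb2. destruct Hb2; [congruence|auto].
    + assert (Ha : F a = 0).
      { destruct (Req_dec (F a) 0) as [|Hn]; auto. exfalso. apply Hi, H; simpl; auto. }
      change (fold_right (fun a r => F a + r) 0 l1) with (zsum F l1).
      rewrite Ha, Rplus_0_l. apply IH; auto. intros b Hb. specialize (H b Hb). split; intros Hb1.
      * apply H; simpl; auto.
      * apply H in Hb1. destruct Hb1; auto. subst. tauto.
Qed.

Definition zrange (lo hi : Z) : list Z :=
  map (fun i => (lo + Z.of_nat i)%Z) (seq 0 (Z.to_nat (hi - lo + 1))).

Lemma In_zrange lo hi a : In a (zrange lo hi) <-> (lo <= a <= hi)%Z.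
Proof.
  unfold zrange. rewrite in_map_iff. split.
  - intros [i [<- Hi]]. apply in_seq in Hi. lia.
  - intros H. exists (Z.to_nat (a - lo)). split; [lia|]. apply in_seq. lia.
Qed.

Lemma NoDup_map_Z {A} (g : A -> Z) l :
  (forall x y, g x = g y -> x = y) -> NoDup l -> NoDup (map g l).
Proof. intros Hg Hl. apply NoDup_map_NoDup_ForallPairs; auto. intros x y _ _; apply Hg. Qed.

Lemma NoDup_zrange lo hi : NoDup (zrange lo hi).
Proof. apply NoDup_map_Z; [intros; lia|apply seq_NoDup]. Qed.

Lemma zsum_zrange_support F lo hi lo' hi' :
  (forall a, F a <> 0 -> (lo <= a <= hi /\ lo' <= a <= hi')%Z) ->
  zsum F (zrange lo hi) = zsum F (zrange lo' hi').
Proof.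
  intros H. apply zsum_support; try apply NoDup_zrange.
  intros a Ha. rewrite !In_zrange. specialize (H a Ha). lia.
Qed.

Lemma zsum_zrange_reindex F (g : Z -> Z) lo hi lo' hi' :
  (forall b, (lo' <= b <= hi')%Z -> (lo <= g b <= hi)%Z) ->
  (forall a, (lo <= a <= hi)%Z -> exists b, g b = a /\ (lo' <= b <= hi')%Z) ->
  (forall b b', g b = g b' -> b = b') ->
  zsum F (zrange lo hi) = zsum (fun b => F (g b)) (zrange lo' hi').
Proof.
  intros Hin Hsurj Hinj. rewrite <- (zsum_map F g). apply zsum_support.
  - apply NoDup_zrange.
  - apply NoDup_map_Z; [exact Hinj|apply NoDup_zrange].
  - intros a _. rewrite In_zrange, in_map_iff. split.
    + intros Ha. destruct (Hsurj a Ha) as [b [<- Hb]]. exists b. rewrite In_zrange. auto.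
    + intros [b [<- Hb]]. rewrite In_zrange in Hb. auto.
Qed.

Lemma zsum_zrange_shift F c lo hi :
  zsum F (zrange lo hi) = zsum (fun b => F (b + c)%Z) (zrange (lo - c) (hi - c)).
Proof.
  apply zsum_zrange_reindex; [intros; lia| |intros; lia].
  intros a Ha. exists (a - c)%Z. split; lia.
Qed.

Lemma zsum_zrange_reflect F c lo hi :
  zsum F (zrange lo hi) = zsum (fun b => F (c - b)%Z) (zrange (c - hi) (c - lo)).
Proof.
  apply zsum_zrange_reindex; [intros; lia| |intros; lia].
  intros a Ha. exists (c - a)%Z. split; lia.
Qed.

Lemma zsum_zrange_single F a : zsum F (zrange a a) = F a.
Proof.
  unfold zrange. replace (Z.to_nat (a - a + 1)) with 1%nat by lia.
  simpl. rewrite Z.add_0_r. lra.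
Qed.

Lemma zsum_zrange_cons F lo hi : (lo <= hi)%Z ->
  zsum F (zrange lo hi) = F lo + zsum F (zrange (lo + 1) hi).
Proof.
  intros H. unfold zrange. replace (Z.to_nat (hi - lo + 1)) with (S (Z.to_nat (hi - (lo + 1) + 1))) by lia.
  simpl. rewrite Z.add_0_r, <- seq_shift, map_map. f_equal.
  unfold zsum. f_equal. apply map_ext. intros. lia.
Qed.

Lemma sum_n_zsum (a : nat -> R) n :
  sum_n a n = zsum (fun z => a (Z.to_nat z)) (zrange 0 (Z.of_nat n)).
Proof.
  induction n as [|n IH].
  - rewrite sum_O, zsum_zrange_single. reflexivity.
  - rewrite sum_Sn, IH. unfold zrange.
    replace (Z.to_nat (Z.of_nat (S n) - 0 + 1)) with (S (Z.to_nat (Z.of_nat n - 0 + 1))) by lia.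
    rewrite seq_S, map_app, zsum_app. simpl. change plus with Rplus.
    replace (Z.to_nat (Z.of_nat (Z.to_nat (Z.of_nat n - 0 + 1)))) with (S n) by lia. lra.
Qed.

Lemma Series_zrange (a : nat -> R) (K : Z) : (0 <= K)%Z ->
  (forall n, (K < Z.of_nat n)%Z -> a n = 0) ->
  Series a = zsum (fun z => a (Z.to_nat z)) (zrange 0 K).
Proof.
  intros hK H. apply is_series_unique. unfold is_series.
  apply (filterlim_ext_loc (fun _ => zsum (fun z => a (Z.to_nat z)) (zrange 0 K))); [|apply filterlim_const].
  exists (Z.to_nat K). intros n Hn. rewrite sum_n_zsum.
  apply zsum_support; try apply NoDup_zrange. intros z Hz. rewrite !In_zrange.
  destruct (Z_le_gt_dec z K) as [|HzK]; [lia|]. exfalso. apply Hz, H. lia.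
Qed.

Definition deg_le (B : Z) (f : ser) : Prop := forall j, (B < j)%Z -> f j = 0.

Lemma deg_le_mono B B' f : (B <= B')%Z -> deg_le B f -> deg_le B' f.
Proof. intros h hf j hj. apply hf. lia. Qed.

Lemma zsum_zrange_split F lo m hi : (lo <= m <= hi + 1)%Z ->
  zsum F (zrange lo hi) = zsum F (zrange lo (m - 1)) + zsum F (zrange m hi).
Proof.
  intros H. rewrite <- zsum_app. apply zsum_support; try apply NoDup_zrange.
  - apply NoDup_app; try apply NoDup_zrange. intros a. rewrite !In_zrange. lia.
  - intros a _. rewrite in_app_iff, !In_zrange. lia.
Qed.

Lemma mulS_zrange f g Bf Bg j lo hi : deg_le Bf f -> deg_le Bg g ->
  (lo <= j - Bg)%Z -> (Bf <= hi)%Z ->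
  mulS f g j = zsum (fun a => f a * g (j - a)%Z) (zrange lo hi).
Proof.
  intros hf hg hlo hhi. set (T := fun a => f a * g (j - a)%Z).
  set (K1 := Z.max 0 Bf). set (K2 := Z.max 0 (Bg - j)). unfold mulS.
  rewrite (Series_zrange _ K1), (Series_zrange _ K2); try lia.
  2:{ intros n Hn. rewrite (hg (j + Z.of_nat n + 1)%Z) by lia. lra. }
  2:{ intros n Hn. rewrite hf by lia. lra. }
  rewrite (zsum_ext _ T) by (intros z Hz; apply In_zrange in Hz; unfold T; do 2 f_equal; lia).
  assert (Hneg : zsum (fun z => f (- Z.of_nat (Z.to_nat z) - 1)%Z * g (j + Z.of_nat (Z.to_nat z) + 1)%Z)
                      (zrange 0 K2) = zsum T (zrange (-1 - K2) (-1))).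
  { rewrite (zsum_zrange_reflect T (-1)). replace (-1 - -1)%Z with 0%Z by lia.
    replace (-1 - (-1 - K2))%Z with K2 by lia.
    apply zsum_ext. intros z Hz. apply In_zrange in Hz. unfold T.
    replace (j - (-1 - z))%Z with (j + Z.of_nat (Z.to_nat z) + 1)%Z by lia. do 2 f_equal. lia. }
  rewrite Hneg, Rplus_comm. replace (-1)%Z with (0 - 1)%Z at 2 by lia.
  rewrite <- (zsum_zrange_split T (-1 - K2) 0 K1) by lia.
  apply zsum_zrange_support. intros a Ha. unfold T in Ha.
  destruct (Z_le_gt_dec a Bf); [|rewrite hf in Ha by lia; lra].
  destruct (Z_le_gt_dec (j - a) Bg); [lia|rewrite hg in Ha by lia; lra].
Qed.

Lemma deg_le_mulS Bf Bg f g : deg_le Bf f -> deg_le Bg g -> deg_le (Bf + Bg) (mulS f g).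
Proof.
  intros hf hg j hj. rewrite (mulS_zrange f g Bf Bg j (j - Bg) Bf); auto; try lia.
  apply zsum_zero. intros a Ha. apply In_zrange in Ha. lia.
Qed.

Lemma mulS_top_coef Bf Bg f g : deg_le Bf f -> deg_le Bg g -> mulS f g (Bf + Bg)%Z = f Bf * g Bg.
Proof.
  intros hf hg. rewrite (mulS_zrange f g Bf Bg _ Bf Bf), zsum_zrange_single by (auto; lia).
  do 2 f_equal. lia.
Qed.

Lemma mulS_comm f g Bf Bg : deg_le Bf f -> deg_le Bg g -> mulS f g = mulS g f.
Proof.
  intros hf hg. extensionality j.
  rewrite (mulS_zrange f g Bf Bg j (j - Bg) Bf), (mulS_zrange g f Bg Bf j (j - Bf) Bg); auto; try lia.
  rewrite (zsum_zrange_reflect _ j). replace (j - (j - Bg))%Z with Bg by lia.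
  apply zsum_ext. intros a _. replace (j - (j - a))%Z with a by lia. lra.
Qed.

Lemma mulS_assoc f g h Bf Bg Bh : deg_le Bf f -> deg_le Bg g -> deg_le Bh h ->
  mulS (mulS f g) h = mulS f (mulS g h).
Proof.
  intros hf hg hh. extensionality j.
  set (A := (Z.abs j + Z.abs Bf + Z.abs Bg + Z.abs Bh)%Z).
  assert (Ha : (Z.abs j <= A /\ Z.abs Bf <= A /\ Z.abs Bg <= A /\ Z.abs Bh <= A)%Z) by (unfold A; lia).
  rewrite (mulS_zrange _ h (Bf + Bg) Bh j (-3*A) (3*A)); [|apply deg_le_mulS; auto|auto|lia|lia].
  rewrite (mulS_zrange f _ Bf (Bg + Bh) j (-3*A) (3*A)); [|auto|apply deg_le_mulS; auto|lia|lia].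
  transitivity (zsum (fun c => zsum (fun a => f a * g (c - a)%Z * h (j - c)%Z)
                                    (zrange (-3*A) (3*A))) (zrange (-3*A) (3*A))).
  - apply zsum_ext. intros c Hc. rewrite In_zrange in Hc.
    destruct (Z_le_gt_dec (j - c) Bh).
    + rewrite (mulS_zrange f g Bf Bg c (-3*A) (3*A)) by (auto; lia).
      rewrite Rmult_comm, <- zsum_scal. apply zsum_ext. intros; ring.
    + rewrite (hh (j - c)%Z), zsum_zero by (intros; try ring; lia). ring.
  - rewrite zsum_swap. apply zsum_ext. intros a Hai. rewrite In_zrange in Hai.
    destruct (Z_le_gt_dec a Bf).
    + rewrite (mulS_zrange g h Bg Bh (j - a) (-5*A) (5*A)), <- zsum_scal by (auto; lia).
      rewrite (zsum_zrange_shift _ (-a) (-5*A) (5*A)). symmetry.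
      rewrite (zsum_ext _ (fun c => f a * g (c - a)%Z * h (j - c)%Z)).
      2:{ intros c _. replace (c + - a)%Z with (c - a)%Z by lia.
          replace (j - a - (c - a))%Z with (j - c)%Z by lia. ring. }
      apply zsum_zrange_support. intros c Hc.
      destruct (Z_le_gt_dec (c - a) Bg); [|rewrite (hg (c - a)%Z) in Hc by lia; lra].
      destruct (Z_le_gt_dec (j - c) Bh); [lia|rewrite (hh (j - c)%Z) in Hc by lia; lra].
    + rewrite (hf a), zsum_zero by (intros; try ring; lia). ring.
Qed.

Definition zeroS : ser := fun _ => 0.

Lemma deg_le_zero B : deg_le B zeroS.
Proof. intros j _; reflexivity. Qed.

Lemma deg_le_one : deg_le 0 oneS.
Proof. intros j hj. unfold oneS. destruct (Z.eqb_spec j 0); [lia|auto]. Qed.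

Lemma deg_le_add B f g : deg_le B f -> deg_le B g -> deg_le B (addS f g).
Proof. intros hf hg j hj. unfold addS. rewrite hf, hg by lia. lra. Qed.

Lemma deg_le_opp B f : deg_le B f -> deg_le B (oppS f).
Proof. intros hf j hj. unfold oppS. rewrite hf by lia. lra. Qed.

Lemma deg_le_sub B f g : deg_le B f -> deg_le B g -> deg_le B (subS f g).
Proof. intros hf hg j hj. unfold subS. rewrite hf, hg by lia. lra. Qed.

Lemma deg_le_scal B c f : deg_le B f -> deg_le B (scalS c f).
Proof. intros hf j hj. unfold scalS. rewrite hf by lia. lra. Qed.

Lemma mulS_1l f B : deg_le B f -> mulS oneS f = f.
Proof.
  intros hf. extensionality j.
  rewrite (mulS_zrange oneS f 0 B j (Z.min 0 (j - B)) 0) by (auto using deg_le_one; lia).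
  rewrite (zsum_zrange_support _ _ _ 0 0), zsum_zrange_single.
  - unfold oneS; simpl. rewrite Z.sub_0_r. lra.
  - intros a Ha. unfold oneS in Ha. destruct (Z.eqb_spec a 0); [lia|lra].
Qed.

Lemma mulS_addl f g h Bf Bg Bh : deg_le Bf f -> deg_le Bg g -> deg_le Bh h ->
  mulS (addS f g) h = addS (mulS f h) (mulS g h).
Proof.
  intros hf hg hh. extensionality j. unfold addS at 2. set (B := Z.max Bf Bg).
  assert (hf' : deg_le B f) by (apply (deg_le_mono Bf); [lia|auto]).
  assert (hg' : deg_le B g) by (apply (deg_le_mono Bg); [lia|auto]).
  rewrite (mulS_zrange _ h B Bh j (j - Bh) B), (mulS_zrange f h B Bh j (j - Bh) B),
    (mulS_zrange g h B Bh j (j - Bh) B); auto using deg_le_add; try lia.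
  rewrite <- zsum_plus. apply zsum_ext. intros; unfold addS; ring.
Qed.

(* Packaging series bounded above as a commutative ring lets [ring] normalize identities between
   series; an identity [E] in [lser] is transported back to [ser] by [f_equal lval E]. *)
Definition lser := {f : ser | exists B, deg_le B f}.
Definition lval (a : lser) : ser := proj1_sig a.
Definition lser_of (f : ser) {B : Z} (h : deg_le B f) : lser :=
  exist (fun f => exists B, deg_le B f) f (ex_intro (fun B => deg_le B f) B h).

Lemma lser_eq (a b : lser) : lval a = lval b -> a = b.
Proof. destruct a, b; simpl. intros ->. f_equal. apply proof_irrelevance. Qed.

Definition lzero : lser := lser_of zeroS (deg_le_zero 0).
Definition lone : lser := lser_of oneS deg_le_one.

Lemma lser_add_ex (a b : lser) : exists B, deg_le B (addS (lval a) (lval b)).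
Proof.
  destruct a as [f [B1 h1]], b as [g [B2 h2]]; simpl. exists (Z.max B1 B2).
  apply deg_le_add; eapply deg_le_mono; eauto; lia.
Qed.

Lemma lser_mul_ex (a b : lser) : exists B, deg_le B (mulS (lval a) (lval b)).
Proof. destruct a as [f [B1 h1]], b as [g [B2 h2]]; simpl. exists (B1 + B2)%Z. apply deg_le_mulS; auto. Qed.

Lemma lser_opp_ex (a : lser) : exists B, deg_le B (oppS (lval a)).
Proof. destruct a as [f [B h]]; simpl. exists B. apply deg_le_opp; auto. Qed.

Definition ladd (a b : lser) : lser := exist _ (addS (lval a) (lval b)) (lser_add_ex a b).
Definition lmul (a b : lser) : lser := exist _ (mulS (lval a) (lval b)) (lser_mul_ex a b).
Definition lopp (a : lser) : lser := exist _ (oppS (lval a)) (lser_opp_ex a).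
Definition lsub (a b : lser) : lser := ladd a (lopp b).

Lemma lser_ring : ring_theory lzero lone ladd lmul lsub lopp (@eq lser).
Proof.
  constructor; intros; apply lser_eq; simpl.
  - extensionality j. unfold addS, zeroS. lra.
  - extensionality j. unfold addS. lra.
  - extensionality j. unfold addS. lra.
  - destruct x as [f [B h]]. simpl. eapply mulS_1l; eauto.
  - destruct x as [f [B1 h1]], y as [g [B2 h2]]. simpl. eapply mulS_comm; eauto.
  - destruct x as [f [B1 h1]], y as [g [B2 h2]], z as [h [B3 h3]]. simpl.
    symmetry. eapply mulS_assoc; eauto.
  - destruct x as [f [B1 h1]], y as [g [B2 h2]], z as [h [B3 h3]]. simpl. eapply mulS_addl; eauto.
  - reflexivity.
  - extensionality j. unfold addS, oppS, zeroS. lra.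
Qed.
Add Ring lser_ring : lser_ring.

Definition summable (F : nat -> ser) : Prop :=
  forall j, exists K, forall m, (K < m)%nat -> forall j', (j <= j')%Z -> F m j' = 0.

Lemma summable_of_deg_le c F : (forall m, deg_le (c - Z.of_nat m) (F m)) -> summable F.
Proof. intros H j. exists (Z.to_nat (c - j)). intros m hm j' hj. apply H. lia. Qed.

Lemma summable_of_finite K F : (forall m, (K < m)%nat -> forall j, F m j = 0) -> summable F.
Proof. intros H j. exists K. intros m hm j' _. apply H; auto. Qed.

Lemma summable_bound F j : summable F ->
  exists K, (0 <= K)%Z /\ forall m, (K < Z.of_nat m)%Z -> forall j', (j <= j')%Z -> F m j' = 0.
Proof.
  intros H. destruct (H j) as [K HK]. exists (Z.of_nat K). split; [lia|].
  intros m hm j' hj. apply HK; auto. lia.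
Qed.

Lemma sumS_zrange F j K : (0 <= K)%Z -> (forall m, (K < Z.of_nat m)%Z -> F m j = 0) ->
  sumS F j = zsum (fun z => F (Z.to_nat z) j) (zrange 0 K).
Proof. intros. unfold sumS. apply Series_zrange; auto. Qed.

Lemma deg_le_sumS B F : (forall m, deg_le B (F m)) -> deg_le B (sumS F).
Proof.
  intros H j hj. rewrite (sumS_zrange _ _ 0) by (try lia; intros; apply H; auto).
  apply zsum_zero. intros; apply H; auto.
Qed.

Lemma sumS_ext F G : (forall m, F m = G m) -> sumS F = sumS G.
Proof. intros H. unfold sumS. extensionality j. f_equal. extensionality m. rewrite H; auto. Qed.

Lemma sumS_add F G : summable F -> summable G ->
  addS (sumS F) (sumS G) = sumS (fun m => addS (F m) (G m)).
Proof.
  intros hF hG. extensionality j.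
  destruct (summable_bound F j hF) as [K1 [h1 H1]], (summable_bound G j hG) as [K2 [h2 H2]].
  unfold addS at 1. set (K := Z.max K1 K2).
  assert (hK : (0 <= K)%Z) by lia.
  rewrite (sumS_zrange F j K hK), (sumS_zrange G j K hK), (sumS_zrange _ j K hK), <- zsum_plus;
    [reflexivity| |intros m hm; apply H2; lia|intros m hm; apply H1; lia].
  intros m hm. unfold addS. rewrite H1, H2 by lia. ring.
Qed.

Lemma sumS_succ F : summable F -> sumS F = addS (F 0%nat) (sumS (fun m => F (S m))).
Proof.
  intros hF. extensionality j. destruct (summable_bound F j hF) as [K [h0 H]]. unfold addS.
  rewrite (sumS_zrange F j (K + 1)), (sumS_zrange _ j K), zsum_zrange_cons by (try intros m hm; try apply H; lia).
  f_equal. rewrite (zsum_zrange_shift _ 1). replace (0 + 1 - 1)%Z with 0%Z by lia.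
  replace (K + 1 - 1)%Z with K by lia.
  apply zsum_ext. intros z Hz. apply In_zrange in Hz. f_equal. lia.
Qed.

Lemma mulS_sumS f Bf F B : deg_le Bf f -> summable F -> (forall m, deg_le B (F m)) ->
  mulS f (sumS F) = sumS (fun m => mulS f (F m)).
Proof.
  intros hf hF hB. extensionality j. destruct (summable_bound F (j - Bf) hF) as [K [h0 H]].
  rewrite (mulS_zrange f _ Bf B j (j - B) Bf hf (deg_le_sumS _ _ hB)) by lia.
  rewrite (sumS_zrange _ j K h0).
  2:{ intros m hm. rewrite (mulS_zrange f _ Bf B j (j - B) Bf hf (hB m)) by lia.
      apply zsum_zero. intros a Ha. apply In_zrange in Ha. rewrite (H m hm) by lia. ring. }
  transitivity (zsum (fun a => zsum (fun z => f a * F (Z.to_nat z) (j - a)%Z) (zrange 0 K)) (zrange (j - B) Bf)).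
  - apply zsum_ext. intros a Ha. apply In_zrange in Ha. rewrite (sumS_zrange _ _ K h0).
    + symmetry; apply zsum_scal.
    + intros m hm. apply H; auto; lia.
  - rewrite zsum_swap. apply zsum_ext. intros z _.
    rewrite (mulS_zrange f _ Bf B j (j - B) Bf hf (hB _)) by lia. reflexivity.
Qed.

Lemma summable_mulS F f B Bf : summable F -> (forall n, deg_le B (F n)) -> deg_le Bf f ->
  summable (fun n => mulS (F n) f).
Proof.
  intros hF hB hf j. destruct (hF (j - Bf)%Z) as [K HK]. exists K. intros m hm j' hj.
  rewrite (mulS_zrange _ _ B Bf j' (j' - Bf) B) by (auto; lia).
  apply zsum_zero. intros a Ha. apply In_zrange in Ha.
  destruct (Z_le_gt_dec (j' - a) Bf).
  - rewrite (HK m hm) by lia. ring.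
  - rewrite (hf (j' - a)%Z) by lia. ring.
Qed.

Lemma summable_scalS F c : summable F -> summable (fun n => scalS (c n) (F n)).
Proof.
  intros hF j. destruct (hF j) as [K HK]. exists K. intros m hm j' hj.
  unfold scalS. rewrite HK; auto. ring.
Qed.

Lemma mulS_scal_l c f g Bf Bg : deg_le Bf f -> deg_le Bg g -> mulS (scalS c f) g = scalS c (mulS f g).
Proof.
  intros hf hg. extensionality j. unfold scalS at 2.
  rewrite (mulS_zrange _ g Bf Bg j (j - Bg) Bf), (mulS_zrange f g Bf Bg j (j - Bg) Bf);
    auto using deg_le_scal; try lia.
  rewrite <- zsum_scal. apply zsum_ext. intros; unfold scalS; ring.
Qed.

Definition constS (c : R) : ser := scalS c oneS.

Lemma deg_le_constS c : deg_le 0 (constS c).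
Proof. apply deg_le_scal, deg_le_one. Qed.

Definition lconst (c : R) : lser := lser_of (constS c) (deg_le_constS c).

Lemma scalS_mulS c f B : deg_le B f -> scalS c f = mulS (constS c) f.
Proof.
  intros h. unfold constS.
  rewrite (mulS_scal_l c oneS f 0 B), (mulS_1l f B); auto using deg_le_one.
Qed.

Lemma lconst_add a b : ladd (lconst a) (lconst b) = lconst (a + b).
Proof. apply lser_eq; simpl. extensionality j. unfold addS, constS, scalS. ring. Qed.

Lemma lconst_mul a b : lmul (lconst a) (lconst b) = lconst (a * b).
Proof.
  apply lser_eq; simpl. unfold constS at 1.
  rewrite (mulS_scal_l a oneS _ 0 0), (mulS_1l _ 0); auto using deg_le_one, deg_le_constS.
  extensionality j. unfold constS, scalS. ring.
Qed.

Lemma lconst_1 : lconst 1 = lone.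
Proof. apply lser_eq; simpl. extensionality j. unfold constS, scalS. ring. Qed.

Lemma lconst_0 : lconst 0 = lzero.
Proof. apply lser_eq; simpl. extensionality j. unfold constS, scalS, zeroS. ring. Qed.

Lemma lconst_opp a : lopp (lconst a) = lconst (- a).
Proof. apply lser_eq; simpl. extensionality j. unfold oppS, constS, scalS. ring. Qed.

Lemma lser_scal_ex c (a : lser) : exists B, deg_le B (scalS c (lval a)).
Proof. destruct a as [f [B h]]. exists B. apply deg_le_scal; auto. Qed.

Definition lscal c (a : lser) : lser := exist _ (scalS c (lval a)) (lser_scal_ex c a).

Lemma lscal_lconst c a : lscal c a = lmul (lconst c) a.
Proof. apply lser_eq. destruct a as [f [B h]]. simpl. apply (scalS_mulS c f B h). Qed.

Lemma deg_le_shift B d f : deg_le B f -> deg_le (B + d) (shiftS d f).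
Proof. intros h j hj. unfold shiftS. apply h. lia. Qed.

Lemma mulS_shift_l d f g Bf Bg : deg_le Bf f -> deg_le Bg g ->
  mulS (shiftS d f) g = shiftS d (mulS f g).
Proof.
  intros hf hg. extensionality j. unfold shiftS at 2.
  rewrite (mulS_zrange _ g (Bf + d) Bg j (j - Bg) (Bf + d)), (mulS_zrange f g Bf Bg (j - d) (j - Bg - d) Bf);
    auto using deg_le_shift; try lia.
  rewrite (zsum_zrange_shift _ d). replace (Bf + d - d)%Z with Bf by lia.
  apply zsum_ext. intros a _. unfold shiftS. replace (a + d - d)%Z with a by lia.
  replace (j - (a + d))%Z with (j - d - a)%Z by lia. reflexivity.
Qed.

Lemma mulS_shift_r d f g Bf Bg : deg_le Bf f -> deg_le Bg g ->
  mulS f (shiftS d g) = shiftS d (mulS f g).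
Proof.
  intros hf hg.
  rewrite (mulS_comm f _ Bf (Bg + d)), (mulS_shift_l d g f Bg Bf), (mulS_comm g f Bg Bf);
    auto using deg_le_shift.
Qed.

Lemma shiftS_shiftS a b f : shiftS a (shiftS b f) = shiftS (a + b) f.
Proof. extensionality j. unfold shiftS. f_equal. lia. Qed.

Lemma shiftS_0 f : shiftS 0 f = f.
Proof. extensionality j. unfold shiftS. f_equal. lia. Qed.

Lemma kS_shiftS : kS = shiftS 1 oneS.
Proof.
  extensionality j. unfold kS, shiftS, oneS.
  destruct (Z.eqb_spec j 1), (Z.eqb_spec (j - 1) 0); auto; lia.
Qed.

Lemma deg_le_powS B f n : deg_le B f -> deg_le (Z.of_nat n * B) (powS f n).
Proof.
  intros h. induction n as [|n IH]; [apply deg_le_one|].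
  replace (Z.of_nat (S n) * B)%Z with (B + Z.of_nat n * B)%Z by lia. apply deg_le_mulS; auto.
Qed.

Lemma powS_top_coef B f n : deg_le B f -> f B = 1 -> powS f n (Z.of_nat n * B)%Z = 1.
Proof.
  intros h h1. induction n as [|n IH]; [reflexivity|].
  change (powS f (S n)) with (mulS f (powS f n)).
  replace (Z.of_nat (S n) * B)%Z with (B + Z.of_nat n * B)%Z by lia.
  rewrite (mulS_top_coef B), h1, IH by auto using deg_le_powS. ring.
Qed.

Definition Lform (L : ser) : Prop := deg_le 1 L /\ L 1%Z = 1 /\ L 0%Z = 0.

(* [w] with [L = k (1 + w)]; [invS] is [k^{-1}] times the geometric series in [-w]. *)
Definition Ltail (L : ser) : ser := shiftS (-1) (subS L kS).

Lemma deg_le_Ltail L : Lform L -> deg_le (-2) (Ltail L).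
Proof.
  intros [h [h1 h0]] j hj. unfold Ltail, shiftS, subS, kS.
  destruct (Z.eqb_spec (j - -1) 1); [replace (j - -1)%Z with 1%Z by lia; rewrite h1; ring|].
  destruct (Z.eq_dec (j - -1) 0) as [e|]; [rewrite e, h0; ring|]. rewrite h by lia. ring.
Qed.

Lemma shiftS_Ltail L : shiftS 1 (addS oneS (Ltail L)) = L.
Proof.
  extensionality j. unfold Ltail, shiftS, addS, subS. rewrite kS_shiftS. unfold shiftS.
  replace (j - 1 - -1)%Z with j by lia. ring.
Qed.

Definition geom (w : ser) : ser := sumS (fun m => powS (oppS w) m).

Lemma deg_le_powS_neg w m : deg_le (-1) w -> deg_le (- Z.of_nat m) (powS (oppS w) m).
Proof. intros hw. eapply deg_le_mono; [|apply deg_le_powS, deg_le_opp, hw]. lia. Qed.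

Lemma summable_geom w : deg_le (-1) w -> summable (fun m => powS (oppS w) m).
Proof. intros hw. apply (summable_of_deg_le 0). intros m. rewrite Z.sub_0_l. apply deg_le_powS_neg, hw. Qed.

Lemma deg_le_geom_terms w m : deg_le (-1) w -> deg_le 0 (powS (oppS w) m).
Proof. intros hw. eapply deg_le_mono; [|apply deg_le_powS_neg; eauto]. lia. Qed.

Lemma deg_le_geom w : deg_le (-1) w -> deg_le 0 (geom w).
Proof. intros hw. apply deg_le_sumS. intros; apply deg_le_geom_terms; auto. Qed.

Lemma geom_succ w : deg_le (-1) w -> geom w = addS oneS (mulS (oppS w) (geom w)).
Proof.
  intros hw. unfold geom at 1. rewrite sumS_succ by (apply summable_geom; auto).
  f_equal. unfold geom. rewrite (mulS_sumS _ (-1) _ 0); auto using deg_le_opp, summable_geom, deg_le_geom_terms.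
Qed.

Lemma deg_le_invS L : Lform L -> deg_le (-1) (invS L).
Proof.
  intros hL. apply (deg_le_shift 0). apply deg_le_geom.
  eapply deg_le_mono; [|apply deg_le_Ltail; auto]. lia.
Qed.

Lemma mulS_invS L : Lform L -> mulS L (invS L) = oneS.
Proof.
  intros hL. unfold invS. fold (Ltail L). fold (geom (Ltail L)).
  pose proof (deg_le_Ltail L hL) as hw.
  assert (hw1 : deg_le (-1) (Ltail L)) by (eapply deg_le_mono; [|exact hw]; lia).
  pose proof (deg_le_geom _ hw1) as hS.
  assert (hA : deg_le 0 (addS oneS (Ltail L)))
    by (apply deg_le_add; auto using deg_le_one; eapply deg_le_mono; eauto; lia).
  rewrite <- (shiftS_Ltail L) at 1.
  rewrite (mulS_shift_l 1 _ _ 0 (0 + -1)), (mulS_shift_r (-1) _ _ 0 0), shiftS_shiftS, shiftS_0;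
    auto using deg_le_shift.
  set (a := lser_of _ hw). set (S := lser_of _ hS).
  assert (E : S = ladd lone (lmul (lopp a) S)) by (apply lser_eq; simpl; apply geom_succ; auto).
  assert (E2 : lmul (ladd lone a) S = lone).
  { transitivity (ladd S (lmul a S)); [ring|]. rewrite E at 1. ring. }
  exact (f_equal lval E2).
Qed.

Lemma zpowS_nat L n : zpowS L (Z.of_nat n) = powS L n.
Proof. destruct n; [reflexivity|]. simpl. rewrite SuccNat2Pos.id_succ. reflexivity. Qed.

Lemma zpowS_neg L n : zpowS L (- Z.of_nat n) = powS (invS L) n.
Proof. destruct n; [reflexivity|]. simpl. rewrite SuccNat2Pos.id_succ. reflexivity. Qed.

Lemma deg_le_zpowS L z : Lform L -> deg_le z (zpowS L z).
Proof.
  intros hL. destruct (Z_le_gt_dec 0 z).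
  - rewrite <- (Z2Nat.id z), zpowS_nat by lia.
    eapply deg_le_mono; [|apply deg_le_powS, hL]. lia.
  - replace z with (- Z.of_nat (Z.to_nat (- z)))%Z by lia. rewrite zpowS_neg.
    eapply deg_le_mono; [|apply deg_le_powS, deg_le_invS, hL]. lia.
Qed.

Lemma deg_le_dkS B f : deg_le B f -> deg_le (B - 1) (dkS f).
Proof. intros h j hj. unfold dkS. rewrite h by lia. ring. Qed.

Lemma dkS_add f g : dkS (addS f g) = addS (dkS f) (dkS g).
Proof. extensionality j. unfold dkS, addS. ring. Qed.

Lemma dkS_sub f g : dkS (subS f g) = subS (dkS f) (dkS g).
Proof. extensionality j. unfold dkS, subS. ring. Qed.

Lemma dkS_scal c f : dkS (scalS c f) = scalS c (dkS f).
Proof. extensionality j. unfold dkS, scalS. ring. Qed.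

Lemma dkS_one : dkS oneS = zeroS.
Proof.
  extensionality j. unfold dkS, oneS, zeroS.
  destruct (Z.eqb_spec (j + 1) 0) as [e|]; [rewrite e; simpl; ring|ring].
Qed.

Lemma dkS_sumS F : dkS (sumS F) = sumS (fun m => dkS (F m)).
Proof. extensionality j. unfold dkS, sumS. rewrite Series_scal_l. reflexivity. Qed.

Lemma dkS_mulS f g Bf Bg : deg_le Bf f -> deg_le Bg g ->
  dkS (mulS f g) = addS (mulS (dkS f) g) (mulS f (dkS g)).
Proof.
  intros hf hg. extensionality j. unfold addS, dkS at 1.
  rewrite (mulS_zrange f g Bf Bg (j + 1) (j + 1 - Bg) Bf),
    (mulS_zrange (dkS f) g (Bf - 1) Bg j (j - Bg) (Bf - 1)),
    (mulS_zrange f (dkS g) Bf (Bg - 1) j (j + 1 - Bg) Bf); auto using deg_le_dkS; try lia.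
  rewrite (zsum_zrange_shift _ (-1) (j - Bg) (Bf - 1)).
  replace (j - Bg - -1)%Z with (j + 1 - Bg)%Z by lia. replace (Bf - 1 - -1)%Z with Bf by lia.
  rewrite <- zsum_plus, <- zsum_scal. apply zsum_ext. intros a _. unfold dkS.
  replace (a + -1 + 1)%Z with a by lia. replace (j - (a + -1))%Z with (j + 1 - a)%Z by lia.
  replace (j - a + 1)%Z with (j + 1 - a)%Z by lia. rewrite !plus_IZR, minus_IZR, plus_IZR. ring.
Qed.

Lemma dkS_powS f B n : deg_le B f ->
  dkS (powS f (S n)) = mulS (constS (INR (S n))) (mulS (powS f n) (dkS f)).
Proof.
  intros hf. set (d := lser_of _ (deg_le_dkS _ _ hf)). set (a := lser_of _ hf).
  induction n as [|n IH].
  - change (powS f 1) with (mulS f oneS). change (powS f 0) with oneS.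
    rewrite (dkS_mulS f oneS B 0), dkS_one by auto using deg_le_one.
    assert (E : ladd (lmul d lone) (lmul a lzero) = lmul (lconst (INR 1)) (lmul lone d))
      by (simpl INR; rewrite lconst_1; ring).
    exact (f_equal lval E).
  - change (powS f (S (S n))) with (mulS f (powS f (S n))).
    rewrite (dkS_mulS f (powS f (S n)) B (Z.of_nat (S n) * B)), IH by auto using deg_le_powS.
    set (p := lser_of _ (deg_le_powS _ _ n hf)).
    assert (E : ladd (lmul d (lmul a p)) (lmul a (lmul (lconst (INR (S n))) (lmul p d)))
               = lmul (lconst (INR (S (S n)))) (lmul (lmul a p) d))
      by (rewrite (S_INR (S n)), <- lconst_add, lconst_1; ring).
    exact (f_equal lval E).
Qed.

(* Differentiating [L * L^{-1} = 1]. *)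
Lemma dkS_invS L : Lform L -> dkS (invS L) = oppS (mulS (mulS (invS L) (invS L)) (dkS L)).
Proof.
  intros hL. pose proof (mulS_invS L hL) as H0.
  pose proof (deg_le_invS L hL) as hi. destruct hL as [hb _].
  assert (H1 : addS (mulS (dkS L) (invS L)) (mulS L (dkS (invS L))) = zeroS)
    by (rewrite <- (dkS_mulS L (invS L) 1 (-1)), H0, dkS_one; auto).
  set (l := lser_of _ hb). set (i := lser_of _ hi).
  set (dl := lser_of _ (deg_le_dkS _ _ hb)). set (di := lser_of _ (deg_le_dkS _ _ hi)).
  assert (E0 : lmul l i = lone) by (apply lser_eq; exact H0).
  assert (E1 : ladd (lmul dl i) (lmul l di) = lzero) by (apply lser_eq; exact H1).
  assert (E : di = lopp (lmul (lmul i i) dl)).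
  { transitivity (lmul di (lmul l i)); [rewrite E0; ring|].
    transitivity (lmul i (lmul l di)); [ring|].
    replace (lmul l di) with (lsub lzero (lmul dl i)) by (rewrite <- E1; ring). ring. }
  exact (f_equal lval E).
Qed.

Lemma dkS_zpowS L z : Lform L ->
  dkS (zpowS L z) = mulS (constS (IZR z)) (mulS (zpowS L (z - 1)) (dkS L)).
Proof.
  intros hL. pose proof hL as [hb _]. set (d := lser_of _ (deg_le_dkS _ _ hb)).
  destruct (Z_lt_le_dec 0 z) as [hz|hz].
  - replace z with (Z.of_nat (S (Z.to_nat (z - 1)))) by lia.
    replace (Z.of_nat (S (Z.to_nat (z - 1))) - 1)%Z with (Z.of_nat (Z.to_nat (z - 1))) by lia.
    rewrite !zpowS_nat, <- INR_IZR_INZ. apply (dkS_powS L 1); auto.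
  - destruct (Z.eq_dec z 0) as [->|hz0].
    + change (zpowS L 0) with oneS. rewrite dkS_one.
      set (a := lser_of _ (deg_le_zpowS L (0 - 1) hL)).
      assert (E : lzero = lmul (lconst (IZR 0)) (lmul a d)) by (rewrite lconst_0; ring).
      exact (f_equal lval E).
    + set (m := Z.to_nat (- z - 1)).
      replace z with (- Z.of_nat (S m))%Z by lia.
      replace (- Z.of_nat (S m) - 1)%Z with (- Z.of_nat (S (S m)))%Z by lia.
      rewrite !zpowS_neg. pose proof (deg_le_invS L hL) as hi.
      rewrite (dkS_powS _ (-1) m hi), (dkS_invS L hL).
      change (powS (invS L) (S (S m))) with (mulS (invS L) (mulS (invS L) (powS (invS L) m))).
      set (i := lser_of _ hi). set (p := lser_of _ (deg_le_powS _ _ m hi)).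
      assert (E : lmul (lconst (INR (S m))) (lmul p (lopp (lmul (lmul i i) d)))
                  = lmul (lconst (IZR (- Z.of_nat (S m)))) (lmul (lmul i (lmul i p)) d))
        by (rewrite opp_IZR, <- INR_IZR_INZ, <- lconst_opp; ring).
      exact (f_equal lval E).
Qed.

Definition exp_terms (G : ser) (m : nat) : ser := scalS (/ INR (fact m)) (powS G m).

Lemma deg_le_exp_terms G m : deg_le (-1) G -> deg_le (- Z.of_nat m) (exp_terms G m).
Proof. intros h. apply deg_le_scal. eapply deg_le_mono; [|apply deg_le_powS; eauto]. lia. Qed.

Lemma summable_exp_terms G : deg_le (-1) G -> summable (exp_terms G).
Proof. intros h. apply (summable_of_deg_le 0). intros m. rewrite Z.sub_0_l. apply deg_le_exp_terms, h. Qed.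

Lemma deg_le_expS G : deg_le (-1) G -> deg_le 0 (expS G).
Proof.
  intros h. apply deg_le_sumS. intros m.
  eapply deg_le_mono; [|apply deg_le_exp_terms; eauto]. lia.
Qed.

Lemma expS_top_coef G : deg_le (-1) G -> expS G 0%Z = 1.
Proof.
  intros h. unfold expS. fold (exp_terms G).
  rewrite (sumS_zrange _ 0 0), zsum_zrange_single by (try intros m hm; try apply deg_le_exp_terms; auto; lia).
  unfold exp_terms, scalS. simpl. unfold oneS. simpl. field.
Qed.

Lemma dkS_expS G : deg_le (-1) G -> dkS (expS G) = mulS (expS G) (dkS G).
Proof.
  intros h. pose proof (deg_le_dkS _ _ h) as hd.
  unfold expS. fold (exp_terms G). rewrite dkS_sumS, sumS_succ.
  2:{ apply (summable_of_deg_le (-1)). intros m. unfold exp_terms. rewrite dkS_scal. apply deg_le_scal.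
      eapply deg_le_mono; [|apply deg_le_dkS, deg_le_powS; eauto]. lia. }
  unfold exp_terms at 1. rewrite dkS_scal. change (powS G 0) with oneS. rewrite dkS_one.
  replace (addS (scalS (/ INR (fact 0)) zeroS) (sumS (fun m => dkS (exp_terms G (S m)))))
    with (sumS (fun m => dkS (exp_terms G (S m)))) by (extensionality j; unfold addS, scalS, zeroS; ring).
  rewrite (mulS_comm _ _ 0 (-1 - 1) (deg_le_expS G h) hd : mulS (sumS (exp_terms G)) (dkS G) = _).
  unfold expS. fold (exp_terms G).
  rewrite (mulS_sumS _ (-1 - 1) _ 0); auto using summable_exp_terms.
  2:{ intros m. eapply deg_le_mono; [|apply deg_le_exp_terms; eauto]. lia. }
  apply sumS_ext. intros m. unfold exp_terms. rewrite dkS_scal, (dkS_powS G (-1) m h).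
  pose proof (deg_le_powS _ _ m h) as hp.
  rewrite (scalS_mulS _ _ _ (deg_le_mulS _ _ _ _ (deg_le_constS _) (deg_le_mulS _ _ _ _ hp hd))),
    (scalS_mulS _ _ _ hp).
  set (p := lser_of _ hp). set (d := lser_of _ hd).
  assert (E : lmul (lconst (/ INR (fact (S m)))) (lmul (lconst (INR (S m))) (lmul p d))
              = lmul d (lmul (lconst (/ INR (fact m))) p)).
  { transitivity (lmul (lmul (lconst (/ INR (fact (S m)))) (lconst (INR (S m)))) (lmul p d)); [ring|].
    rewrite lconst_mul. replace (/ INR (fact (S m)) * INR (S m)) with (/ INR (fact m)); [ring|].
    rewrite fact_simpl, mult_INR. field. split; [apply INR_fact_neq_0|apply not_0_INR; lia]. }
  exact (f_equal lval E).
Qed.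

Definition is_deriveS (F : R -> ser) (y0 : R) (F' : ser) : Prop :=
  (exists B, forall y, deg_le B (F y)) /\ forall j, is_derive (fun y => F y j) y0 (F' j).

Section SeriesDerivative.
Variable y0 : R.

Lemma is_deriveS_deg_le F F' B : (forall y, deg_le B (F y)) ->
  (forall j, is_derive (fun y => F y j) y0 (F' j)) -> deg_le B F'.
Proof.
  intros hB hD j hj. specialize (hD j). apply is_derive_unique in hD. rewrite <- hD.
  rewrite (Derive_ext _ (fun _ => 0)) by (intros; apply hB; auto). apply Derive_const.
Qed.

Lemma is_deriveS_bound F F' : is_deriveS F y0 F' -> exists B, deg_le B F' /\ forall y, deg_le B (F y).
Proof. intros [[B hB] hD]. exists B. split; auto. eapply is_deriveS_deg_le; eauto. Qed.

Lemma is_deriveS_unique F A B : is_deriveS F y0 A -> is_deriveS F y0 B -> A = B.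
Proof.
  intros [_ h1] [_ h2]. extensionality j.
  specialize (h1 j). specialize (h2 j). apply is_derive_unique in h1, h2. congruence.
Qed.

Lemma is_deriveS_ext F G A : (forall y, F y = G y) -> is_deriveS F y0 A -> is_deriveS G y0 A.
Proof.
  intros H [[B hB] hD]. split.
  - exists B. intros y; rewrite <- H; auto.
  - intros j. apply (is_derive_ext (fun y => F y j)); auto. intros; rewrite H; auto.
Qed.

Lemma is_deriveS_const f B : deg_le B f -> is_deriveS (fun _ => f) y0 zeroS.
Proof. intros h. split; [exists B; auto|]. intros j. apply (is_derive_const (f j)). Qed.

Lemma is_deriveS_Derive (F : R -> ser) B : (forall y, deg_le B (F y)) ->
  (forall j, ex_derive (fun y => F y j) y0) -> is_deriveS F y0 (fun j => Derive (fun y => F y j) y0).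
Proof. intros hB hD. split; [exists B; auto|]. intros j. apply Derive_correct. auto. Qed.

Lemma is_deriveS_add F F' G G' : is_deriveS F y0 F' -> is_deriveS G y0 G' ->
  is_deriveS (fun y => addS (F y) (G y)) y0 (addS F' G').
Proof.
  intros [[B1 h1] d1] [[B2 h2] d2]. split.
  - exists (Z.max B1 B2). intros y. apply deg_le_add; eapply deg_le_mono; eauto; lia.
  - intros j. unfold addS. apply (is_derive_plus (fun y => F y j) (fun y => G y j)); auto.
Qed.

Lemma is_deriveS_sub F F' G G' : is_deriveS F y0 F' -> is_deriveS G y0 G' ->
  is_deriveS (fun y => subS (F y) (G y)) y0 (subS F' G').
Proof.
  intros [[B1 h1] d1] [[B2 h2] d2]. split.
  - exists (Z.max B1 B2). intros y. apply deg_le_sub; eapply deg_le_mono; eauto; lia.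
  - intros j. unfold subS. apply (is_derive_minus (fun y => F y j) (fun y => G y j)); auto.
Qed.

Lemma is_deriveS_opp F F' : is_deriveS F y0 F' -> is_deriveS (fun y => oppS (F y)) y0 (oppS F').
Proof.
  intros [[B h] d]. split.
  - exists B. intros y. apply deg_le_opp; auto.
  - intros j. unfold oppS. apply (is_derive_opp (fun y => F y j)); auto.
Qed.

Lemma is_deriveS_scal_fun (c : R -> R) c' F F' : is_derive c y0 c' -> is_deriveS F y0 F' ->
  is_deriveS (fun y => scalS (c y) (F y)) y0 (addS (scalS c' (F y0)) (scalS (c y0) F')).
Proof.
  intros hc [[B h] d]. split.
  - exists B. intros y. apply deg_le_scal; auto.
  - intros j. unfold scalS, addS. apply (is_derive_mult c (fun y => F y j)); auto.
    intros; apply Rmult_comm.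
Qed.

Lemma is_deriveS_scal c F F' : is_deriveS F y0 F' -> is_deriveS (fun y => scalS c (F y)) y0 (scalS c F').
Proof.
  intros [[B h] d]. split.
  - exists B. intros y. apply deg_le_scal; auto.
  - intros j. unfold scalS. apply (is_derive_scal (fun y => F y j)); auto.
Qed.

Lemma is_deriveS_shift d F F' : is_deriveS F y0 F' -> is_deriveS (fun y => shiftS d (F y)) y0 (shiftS d F').
Proof.
  intros [[B h] hd]. split.
  - exists (B + d)%Z. intros y. apply deg_le_shift; auto.
  - intros j. unfold shiftS. apply hd.
Qed.

Lemma is_deriveS_mul F F' G G' : is_deriveS F y0 F' -> is_deriveS G y0 G' ->
  is_deriveS (fun y => mulS (F y) (G y)) y0 (addS (mulS F' (G y0)) (mulS (F y0) G')).
Proof.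
  intros [[B1 h1] d1] [[B2 h2] d2].
  pose proof (is_deriveS_deg_le F F' B1 h1 d1) as h1'.
  pose proof (is_deriveS_deg_le G G' B2 h2 d2) as h2'. split.
  - exists (B1 + B2)%Z. intros y. apply deg_le_mulS; auto.
  - intros j. unfold addS.
    apply (is_derive_ext (fun y => zsum (fun a => F y a * G y (j - a)%Z) (zrange (j - B2) B1))).
    { intros y. rewrite (mulS_zrange _ _ B1 B2 j (j - B2) B1); auto; lia. }
    rewrite (mulS_zrange _ _ B1 B2 j (j - B2) B1), (mulS_zrange _ _ B1 B2 j (j - B2) B1), <- zsum_plus;
      auto; try lia.
    induction (zrange (j - B2) B1) as [|a l IH]; simpl.
    + apply (is_derive_const 0).
    + apply (is_derive_plus (fun y => F y a * G y (j - a)%Z)); auto.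
      apply (is_derive_mult (fun y => F y a) (fun y => G y (j - a)%Z)); auto. intros; apply Rmult_comm.
Qed.

Lemma is_deriveS_sumS (F : nat -> R -> ser) F' B :
  (forall m, is_deriveS (F m) y0 (F' m)) -> (forall m y, deg_le B (F m y)) ->
  (forall j, exists K, forall m, (K < m)%nat -> forall y j', (j <= j')%Z -> F m y j' = 0) ->
  is_deriveS (fun y => sumS (fun m => F m y)) y0 (sumS F').
Proof.
  intros hD hB hE. split.
  - exists B. intros y. apply deg_le_sumS. auto.
  - intros j. destruct (hE j) as [K HK].
    assert (HK' : forall m, (Z.of_nat K < Z.of_nat m)%Z -> F' m j = 0).
    { intros m hm. destruct (hD m) as [_ d]. specialize (d j). apply is_derive_unique in d.
      rewrite <- d, (Derive_ext _ (fun _ => 0)) by (intros; apply HK; auto; lia). apply Derive_const. }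
    apply (is_derive_ext (fun y => zsum (fun z => F (Z.to_nat z) y j) (zrange 0 (Z.of_nat K)))).
    { intros y. symmetry. apply sumS_zrange; [lia|]. intros m hm. apply HK; auto; lia. }
    rewrite (sumS_zrange _ j (Z.of_nat K)); [|lia|exact HK'].
    induction (zrange 0 (Z.of_nat K)) as [|a l IH]; simpl.
    + apply (is_derive_const 0).
    + apply (is_derive_plus (fun y => F (Z.to_nat a) y j)); auto. apply hD.
Qed.

End SeriesDerivative.

Section SeriesDerivativeRules.
Variable y0 : R.

Lemma is_deriveS_powS F F' n : is_deriveS F y0 F' ->
  is_deriveS (fun y => powS (F y) (S n)) y0 (mulS (constS (INR (S n))) (mulS (powS (F y0) n) F')).
Proof.
  intros hD. destruct (is_deriveS_bound _ _ _ hD) as [B [hB' hB]].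
  set (a := lser_of _ (hB y0)). set (d := lser_of _ hB').
  induction n as [|n IH].
  - replace (mulS (constS (INR 1)) (mulS (powS (F y0) 0) F')) with (addS (mulS F' oneS) (mulS (F y0) zeroS)).
    + apply (is_deriveS_mul y0 F F' (fun _ => oneS) zeroS hD (is_deriveS_const y0 _ 0 deg_le_one)).
    + assert (E : ladd (lmul d lone) (lmul a lzero) = lmul (lconst (INR 1)) (lmul lone d))
        by (simpl INR; rewrite lconst_1; ring).
      exact (f_equal lval E).
  - replace (mulS (constS (INR (S (S n)))) (mulS (powS (F y0) (S n)) F'))
      with (addS (mulS F' (powS (F y0) (S n))) (mulS (F y0) (mulS (constS (INR (S n))) (mulS (powS (F y0) n) F')))).
    + apply (is_deriveS_mul y0 F F' (fun y => powS (F y) (S n))); auto.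
    + change (powS (F y0) (S n)) with (mulS (F y0) (powS (F y0) n)).
      set (p := lser_of _ (deg_le_powS _ _ n (hB y0))).
      assert (E : ladd (lmul d (lmul a p)) (lmul a (lmul (lconst (INR (S n))) (lmul p d)))
                 = lmul (lconst (INR (S (S n)))) (lmul (lmul a p) d))
        by (rewrite (S_INR (S n)), <- lconst_add, lconst_1; ring).
      exact (f_equal lval E).
Qed.

(* The inverse is differentiable termwise through its geometric series; its derivative is then
   forced by differentiating [L * L^{-1} = 1]. *)
Lemma is_deriveS_invS L L' : (forall y, Lform (L y)) -> is_deriveS L y0 L' ->
  is_deriveS (fun y => invS (L y)) y0 (oppS (mulS (mulS (invS (L y0)) (invS (L y0))) L')).
Proof.
  intros hL hD. destruct (is_deriveS_bound _ _ _ hD) as [B [hB' hB]].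
  assert (hk : deg_le 1 kS) by (intros j hj; unfold kS; destruct (Z.eqb_spec j 1); [lia|auto]).
  assert (hw : is_deriveS (fun y => oppS (Ltail (L y))) y0 (oppS (shiftS (-1) (subS L' zeroS))))
    by (apply is_deriveS_opp, is_deriveS_shift, is_deriveS_sub, (is_deriveS_const y0 _ 1 hk); auto).
  assert (hex : exists I', is_deriveS (fun y => invS (L y)) y0 I').
  { set (W' := oppS (shiftS (-1) (subS L' zeroS))).
    set (D := fun m => match m with
                       | O => zeroS
                       | S n => mulS (constS (INR (S n))) (mulS (powS (oppS (Ltail (L y0))) n) W')
                       end).
    exists (shiftS (-1) (sumS D)). apply is_deriveS_shift.
    apply (is_deriveS_sumS y0 (fun m y => powS (oppS (Ltail (L y))) m) D 0).
    - intros [|n]; [apply (is_deriveS_const y0 _ 0 deg_le_one)|apply is_deriveS_powS; auto].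
    - intros m y. apply deg_le_geom_terms. eapply deg_le_mono; [|apply deg_le_Ltail; auto]. lia.
    - intros j. exists (Z.to_nat (- j)). intros m hm y j' hj.
      apply (deg_le_powS_neg (Ltail (L y)) m); [|lia].
      eapply deg_le_mono; [|apply deg_le_Ltail; auto]. lia. }
  destruct hex as [I' hI].
  pose proof (deg_le_invS _ (hL y0)) as hi. destruct (is_deriveS_bound _ _ _ hI) as [Bi [hi' _]].
  assert (H0 : addS (mulS L' (invS (L y0))) (mulS (L y0) I') = zeroS).
  { eapply is_deriveS_unique; [exact (is_deriveS_mul y0 L L' (fun y => invS (L y)) I' hD hI)|].
    apply (is_deriveS_ext y0 (fun _ => oneS)); [intros; symmetry; apply mulS_invS; auto|].
    apply (is_deriveS_const y0 _ 0 deg_le_one). }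
  replace (oppS (mulS (mulS (invS (L y0)) (invS (L y0))) L')) with I'; [exact hI|].
  pose proof (mulS_invS _ (hL y0)) as H1.
  set (l := lser_of _ (hB y0)). set (i := lser_of _ hi). set (dl := lser_of _ hB'). set (di := lser_of _ hi').
  assert (E0 : lmul l i = lone) by (apply lser_eq; exact H1).
  assert (E1 : ladd (lmul dl i) (lmul l di) = lzero) by (apply lser_eq; exact H0).
  assert (E : di = lopp (lmul (lmul i i) dl)).
  { transitivity (lmul di (lmul l i)); [rewrite E0; ring|].
    transitivity (lmul i (lmul l di)); [ring|].
    replace (lmul l di) with (lsub lzero (lmul dl i)) by (rewrite <- E1; ring). ring. }
  exact (f_equal lval E).
Qed.

Lemma is_deriveS_zpowS L L' z : (forall y, Lform (L y)) -> is_deriveS L y0 L' ->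
  is_deriveS (fun y => zpowS (L y) z) y0 (mulS (constS (IZR z)) (mulS (zpowS (L y0) (z - 1)) L')).
Proof.
  intros hL hD. destruct (is_deriveS_bound _ _ _ hD) as [B [hB' hB]]. set (d := lser_of _ hB').
  destruct (Z_lt_le_dec 0 z) as [hz|hz].
  - replace z with (Z.of_nat (S (Z.to_nat (z - 1)))) by lia.
    replace (Z.of_nat (S (Z.to_nat (z - 1))) - 1)%Z with (Z.of_nat (Z.to_nat (z - 1))) by lia.
    rewrite zpowS_nat, <- INR_IZR_INZ.
    apply (is_deriveS_ext y0 (fun y => powS (L y) (S (Z.to_nat (z - 1))))); [intros; rewrite zpowS_nat; auto|].
    apply is_deriveS_powS; auto.
  - destruct (Z.eq_dec z 0) as [->|hz0].
    + replace (mulS (constS (IZR 0)) (mulS (zpowS (L y0) (0 - 1)) L')) with zeroS;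
        [apply (is_deriveS_const y0 oneS 0 deg_le_one)|].
      set (a := lser_of _ (deg_le_zpowS (L y0) (0 - 1) (hL y0))).
      assert (E : lzero = lmul (lconst (IZR 0)) (lmul a d)) by (rewrite lconst_0; ring).
      exact (f_equal lval E).
    + set (m := Z.to_nat (- z - 1)).
      replace z with (- Z.of_nat (S m))%Z by lia.
      replace (- Z.of_nat (S m) - 1)%Z with (- Z.of_nat (S (S m)))%Z by lia. rewrite zpowS_neg.
      apply (is_deriveS_ext y0 (fun y => powS (invS (L y)) (S m))); [intros; rewrite zpowS_neg; auto|].
      pose proof (deg_le_invS _ (hL y0)) as hi.
      replace (mulS (constS (IZR (- Z.of_nat (S m)))) (mulS (powS (invS (L y0)) (S (S m))) L'))
        with (mulS (constS (INR (S m))) (mulS (powS (invS (L y0)) m)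
                (oppS (mulS (mulS (invS (L y0)) (invS (L y0))) L'))));
        [apply is_deriveS_powS, is_deriveS_invS; auto|].
      change (powS (invS (L y0)) (S (S m)))
        with (mulS (invS (L y0)) (mulS (invS (L y0)) (powS (invS (L y0)) m))).
      set (i := lser_of _ hi). set (p := lser_of _ (deg_le_powS _ _ m hi)).
      assert (E : lmul (lconst (INR (S m))) (lmul p (lopp (lmul (lmul i i) d)))
                  = lmul (lconst (IZR (- Z.of_nat (S m)))) (lmul (lmul i (lmul i p)) d))
        by (rewrite opp_IZR, <- INR_IZR_INZ, <- lconst_opp; ring).
      exact (f_equal lval E).
Qed.

End SeriesDerivativeRules.

Definition chain_term (a : nat -> R) (z : nat -> Z) (L D : ser) (n : nat) : ser :=
  scalS (a n) (mulS (constS (IZR (z n))) (mulS (zpowS L (z n - 1)) D)).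

(* The first-order variation of [sum_n a_n L^(z_n)] when [L] varies in the direction [D]. *)
Definition chainS (a : nat -> R) (z : nat -> Z) (L D : ser) : ser := sumS (chain_term a z L D).

Lemma chain_term_scal a z L D BD n : Lform L -> deg_le BD D ->
  chain_term a z L D n = scalS (IZR (z n)) (mulS (scalS (a n) (zpowS L (z n - 1))) D).
Proof.
  intros hL hD. unfold chain_term.
  set (P := lser_of _ (deg_le_zpowS L (z n - 1) hL)). set (d := lser_of _ hD).
  assert (E : lscal (a n) (lmul (lconst (IZR (z n))) (lmul P d))
              = lscal (IZR (z n)) (lmul (lscal (a n) P) d)) by (rewrite !lscal_lconst; ring).
  exact (f_equal lval E).
Qed.

Lemma deg_le_chainS a z L D B BD : Lform L -> deg_le BD D ->
  (forall n, deg_le B (scalS (a n) (zpowS L (z n - 1)))) -> deg_le (B + BD) (chainS a z L D).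
Proof.
  intros hL hD hB. apply deg_le_sumS. intros n.
  rewrite (chain_term_scal _ _ _ _ BD) by auto. apply deg_le_scal, deg_le_mulS; auto.
Qed.

Lemma mulS_chainS_comm (a : nat -> R) (z : nat -> Z) L D E B BD BE :
  Lform L -> deg_le BD D -> deg_le BE E ->
  (forall n, deg_le B (scalS (a n) (zpowS L (z n - 1)))) ->
  summable (fun n => scalS (a n) (zpowS L (z n - 1))) ->
  mulS E (chainS a z L D) = mulS D (chainS a z L E).
Proof.
  intros hL hD hE hB hS. unfold chainS.
  rewrite (sumS_ext _ _ (fun n => chain_term_scal a z L D BD n hL hD)),
    (sumS_ext _ _ (fun n => chain_term_scal a z L E BE n hL hE)).
  rewrite (mulS_sumS E BE _ (B + BD)), (mulS_sumS D BD _ (B + BE));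
    eauto using deg_le_scal, deg_le_mulS, summable_scalS, summable_mulS.
  apply sumS_ext. intros n.
  set (x := lser_of _ (hB n)). set (d := lser_of _ hD). set (e := lser_of _ hE).
  assert (E' : lmul e (lscal (IZR (z n)) (lmul x d)) = lmul d (lscal (IZR (z n)) (lmul x e)))
    by (rewrite !lscal_lconst; ring).
  exact (f_equal lval E').
Qed.

Lemma Lfield_Lform u x t y : Lform (Lfield u x t y).
Proof.
  unfold Lform, Lfield. split; [|split; reflexivity].
  intros j hj. destruct (Z.eqb_spec j 1); [lia|]. destruct (Z.leb_spec j (-1)); [lia|auto].
Qed.

Lemma deg_le_Pfield N p x t y : deg_le (Z.of_nat N) (Pfield N p x t y).
Proof.
  intros j hj. unfold Pfield. destruct (Z.eqb_spec j (Z.of_nat N)); [lia|].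
  destruct (Z.leb_spec 0 j), (Z.ltb_spec j (Z.of_nat N)); simpl; auto; lia.
Qed.

Lemma Pfield_top_coef N p x t y : Pfield N p x t y (Z.of_nat N) = 1.
Proof. unfold Pfield. rewrite Z.eqb_refl. reflexivity. Qed.

Lemma deg_le_Derive (F : R -> ser) B y0 : (forall y, deg_le B (F y)) ->
  deg_le B (fun j => Derive (fun y => F y j) y0).
Proof. intros H j hj. rewrite (Derive_ext _ (fun _ => 0)) by (intros; apply H; auto). apply Derive_const. Qed.

Lemma dsF_eq (F : fser) x t s F' : is_deriveS (fun y => F x t y) s F' -> dsF F x t s = F'.
Proof. intros [_ hd]. extensionality j. apply is_derive_unique, hd. Qed.

Lemma is_deriveS_Lfield (u : nat -> coef) x t s : (forall n, regular (u n)) -> finsupp t ->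
  is_deriveS (fun y => Lfield u x t y) s (dsF (Lfield u) x t s).
Proof.
  intros hu ht. apply (is_deriveS_Derive s _ 1); [intros; apply Lfield_Lform|].
  intros j. unfold Lfield. destruct (Z.eqb j 1); [apply ex_derive_const|].
  destruct (Z.leb j (-1)); [|apply ex_derive_const]. apply (hu _ x t s ht).
Qed.

Definition logS (L : ser) (c : nat -> R) : ser :=
  sumS (fun m => scalS (-1 / INR (S m) * c m) (zpowS L (- Z.of_nat (S m)))).

(* [dlogS L c] is the derivative of [logS L c] with respect to [L]. *)
Definition dlogS (L : ser) (c : nat -> R) : ser :=
  sumS (fun m => scalS (c m) (zpowS L (- Z.of_nat (S m) - 1))).

Lemma deg_le_logS L c : Lform L -> deg_le (-1) (logS L c).
Proof.
  intros hL. apply deg_le_sumS. intros m. apply deg_le_scal.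
  eapply deg_le_mono; [|apply deg_le_zpowS; auto]. lia.
Qed.

Lemma deg_le_dlogS_terms L c m : Lform L -> deg_le (-2) (scalS (c m) (zpowS L (- Z.of_nat (S m) - 1))).
Proof. intros hL. apply deg_le_scal. eapply deg_le_mono; [|apply deg_le_zpowS; auto]. lia. Qed.

Lemma summable_dlogS_terms L c : Lform L ->
  summable (fun m => scalS (c m) (zpowS L (- Z.of_nat (S m) - 1))).
Proof.
  intros hL. apply (summable_of_deg_le (-2)). intros m. apply deg_le_scal.
  eapply deg_le_mono; [|apply deg_le_zpowS; auto]. lia.
Qed.

Lemma deg_le_dlogS L c : Lform L -> deg_le (-2) (dlogS L c).
Proof. intros hL. apply deg_le_sumS. intros m. apply deg_le_dlogS_terms, hL. Qed.

Lemma dkS_logS L c : Lform L -> dkS (logS L c) = mulS (dkS L) (dlogS L c).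
Proof.
  intros hL. pose proof (deg_le_dkS _ _ (proj1 hL)) as hk.
  unfold logS, dlogS. rewrite dkS_sumS, (mulS_sumS _ 0 _ (-2)) by auto using summable_dlogS_terms, deg_le_dlogS_terms.
  apply sumS_ext. intros m. rewrite dkS_scal, dkS_zpowS by auto.
  set (zz := lser_of _ (deg_le_zpowS L (- Z.of_nat (S m) - 1) hL)). set (k := lser_of _ hk).
  assert (E : lscal (-1 / INR (S m) * c m) (lmul (lconst (IZR (- Z.of_nat (S m)))) (lmul zz k))
              = lmul k (lscal (c m) zz)).
  { rewrite !lscal_lconst.
    transitivity (lmul (lmul (lconst (-1 / INR (S m) * c m)) (lconst (IZR (- Z.of_nat (S m))))) (lmul zz k));
      [ring|].
    rewrite lconst_mul. replace (-1 / INR (S m) * c m * IZR (- Z.of_nat (S m))) with (c m); [ring|].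
    rewrite opp_IZR, <- INR_IZR_INZ. field. apply not_0_INR. lia. }
  exact (f_equal lval E).
Qed.

Lemma dkS_powS_expS_logS L N c : Lform L -> (0 < N)%nat ->
  dkS (mulS (powS L N) (expS (logS L c)))
  = mulS (mulS (powS L N) (expS (logS L c)))
         (mulS (dkS L) (addS (scalS (INR N) (invS L)) (dlogS L c))).
Proof.
  intros hL hN. destruct N as [|n]; [lia|]. pose proof hL as [hL1 _].
  pose proof (deg_le_logS L c hL) as hG.
  pose proof (deg_le_powS _ _ n hL1) as hpn. pose proof (deg_le_powS _ _ (S n) hL1) as hpN.
  pose proof (deg_le_expS _ hG) as hE. pose proof (deg_le_dkS _ _ hL1) as hk.
  pose proof (deg_le_invS L hL) as hI. pose proof (deg_le_dlogS L c hL) as hW.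
  rewrite (dkS_mulS _ _ _ _ hpN hE), (dkS_powS L 1 n hL1), (dkS_expS _ hG), (dkS_logS L c hL).
  change (powS L (S n)) with (mulS L (powS L n)).
  set (l := lser_of _ hL1). set (pn := lser_of _ hpn). set (e := lser_of _ hE).
  set (k := lser_of _ hk). set (i := lser_of _ hI). set (w := lser_of _ hW).
  assert (E0 : lmul l i = lone) by (apply lser_eq, mulS_invS, hL).
  assert (E : ladd (lmul (lmul (lconst (INR (S n))) (lmul pn k)) e) (lmul (lmul l pn) (lmul e (lmul k w)))
              = lmul (lmul (lmul l pn) e) (lmul k (ladd (lscal (INR (S n)) i) w))).
  { rewrite lscal_lconst.
    transitivity (ladd (ladd (lmul (lmul (lconst (INR (S n))) (lmul pn k)) e) (lmul (lmul l pn) (lmul e (lmul k w))))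
                       (lmul (lmul (lmul (lconst (INR (S n))) pn) (lmul k e)) (lsub (lmul l i) lone)));
      [rewrite E0; ring|ring]. }
  exact (f_equal lval E).
Qed.

Lemma powS_expS_monic L G N : Lform L -> deg_le (-1) G ->
  deg_le (Z.of_nat N) (mulS (powS L N) (expS G)) /\ mulS (powS L N) (expS G) (Z.of_nat N) = 1.
Proof.
  intros [hL1 [hL2 _]] hG. pose proof (deg_le_powS _ _ N hL1) as hpN. pose proof (deg_le_expS _ hG) as hE.
  rewrite <- (Z.add_0_r (Z.of_nat N)), <- (Z.mul_1_r (Z.of_nat N)). split.
  - apply deg_le_mulS; auto.
  - rewrite (mulS_top_coef _ _ _ _ hpN hE), powS_top_coef, expS_top_coef by auto. ring.
Qed.

Section MfieldChainRule.
Variables (N : nat) (u v : nat -> coef) (t : nat -> R) (K : nat).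
Hypothesis hK : forall n, (K < n)%nat -> t n = 0.

Let aT (n : nat) : R := INR n * t n.
Let zT (n : nat) : Z := (Z.of_nat n - 1)%Z.
Let zV (i : nat) : Z := (- Z.of_nat (S i) - 1)%Z.

Lemma deg_le_time_terms x y n :
  deg_le (Z.of_nat K) (scalS (INR n * t n) (zpowS (Lfield u x t y) (Z.of_nat n - 1))).
Proof.
  destruct (le_lt_dec n K).
  - apply deg_le_scal. eapply deg_le_mono; [|apply deg_le_zpowS, Lfield_Lform]. lia.
  - intros j _. unfold scalS. rewrite hK by auto. ring.
Qed.

Lemma deg_le_Mfield x y : deg_le (Z.of_nat K) (Mfield N u v x t y).
Proof.
  pose proof (Lfield_Lform u x t y) as hL. unfold Mfield.
  repeat apply deg_le_add; apply deg_le_sumS || apply deg_le_scal.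
  - apply deg_le_time_terms.
  - eapply deg_le_mono; [|apply deg_le_one]. lia.
  - eapply deg_le_mono; [|apply deg_le_invS; auto]. lia.
  - intros i. apply deg_le_scal. eapply deg_le_mono; [|apply deg_le_zpowS; auto]. lia.
Qed.

Variables (x s : R).
Hypotheses (hu : forall n, regular (u n)) (hv : forall n, regular (v n)).

Let L0 := Lfield u x t s.
Let I0 := invS L0.
Let Ls := dsF (Lfield u) x t s.
Let Lk := dkS L0.
Let aV (i : nat) : R := v (S i) x t s.
Let vs (i : nat) : R := dsC (v (S i)) x t s.

Let Ms := addS (chainS aT zT L0 Ls)
  (addS zeroS (addS (addS (scalS (INR N) I0) (scalS (INR N * s) (oppS (mulS (mulS I0 I0) Ls))))
    (sumS (fun i => addS (scalS (vs i) (zpowS L0 (zV i))) (chain_term aV zV L0 Ls i))))).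
Let Mk := addS (chainS aT zT L0 Lk)
  (addS (scalS x zeroS) (addS (scalS (INR N * s) (oppS (mulS (mulS I0 I0) Lk))) (chainS aV zV L0 Lk))).

Lemma dsF_Mfield : dsF (Mfield N u v) x t s = Ms.
Proof.
  assert (ht : finsupp t) by (exists K; exact hK).
  pose proof (is_deriveS_Lfield u x t s hu ht) as hD.
  assert (hL : forall y, Lform (Lfield u x t y)) by (intros; apply Lfield_Lform).
  apply dsF_eq. unfold Mfield.
  apply is_deriveS_add; [|apply is_deriveS_add; [apply (is_deriveS_const s _ 0), deg_le_scal, deg_le_one|]].
  - apply (is_deriveS_sumS s _ _ (Z.of_nat K)).
    + intros n. apply is_deriveS_scal, is_deriveS_zpowS; auto.
    + intros n y. apply deg_le_time_terms.
    + intros j. exists K. intros m hm y j' _. unfold scalS. rewrite hK by auto. ring.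
  - apply is_deriveS_add.
    + apply (is_deriveS_scal_fun s (fun y => INR N * y)); [|apply is_deriveS_invS; auto].
      auto_derive; [auto|ring].
    + apply (is_deriveS_sumS s _ _ (-2)).
      * intros i. apply (is_deriveS_scal_fun s (fun y => v (S i) x t y)); [|apply is_deriveS_zpowS; auto].
        apply Derive_correct, (hv (S i) x t s ht).
      * intros i y. apply deg_le_scal. eapply deg_le_mono; [|apply deg_le_zpowS; auto]. lia.
      * intros j. exists (Z.to_nat (- j)). intros m hm y j' hj.
        refine (deg_le_scal _ _ _ (deg_le_zpowS _ _ (hL y)) _ _). lia.
Qed.

Lemma dkS_Mfield : dkS (Mfield N u v x t s) = Mk.
Proof.
  pose proof (Lfield_Lform u x t s) as hL. unfold Mfield.
  rewrite !dkS_add, !dkS_sumS, !dkS_scal, dkS_one, (dkS_invS _ hL). unfold Mk, chainS.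
  f_equal; [|f_equal; f_equal].
  - apply sumS_ext. intros n. rewrite dkS_scal, dkS_zpowS; auto.
  - apply sumS_ext. intros i. rewrite dkS_scal, dkS_zpowS; auto.
Qed.

Lemma deg_le_Ls : deg_le 1 Ls.
Proof. apply (deg_le_Derive (fun y => Lfield u x t y)). intros; apply Lfield_Lform. Qed.

Lemma deg_le_time_coefs n : deg_le (Z.of_nat K) (scalS (aT n) (zpowS L0 (zT n - 1))).
Proof.
  destruct (le_lt_dec n K).
  - apply deg_le_scal. eapply deg_le_mono; [|apply deg_le_zpowS, Lfield_Lform]. unfold zT; lia.
  - intros j _. unfold scalS, aT. rewrite hK by auto. ring.
Qed.

Lemma summable_time_coefs : summable (fun n => scalS (aT n) (zpowS L0 (zT n - 1))).
Proof. apply (summable_of_finite K). intros m hm j. unfold scalS, aT. rewrite hK by auto. ring. Qed.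

Lemma deg_le_v_coefs i : deg_le (-3) (scalS (aV i) (zpowS L0 (zV i - 1))).
Proof. apply deg_le_scal. eapply deg_le_mono; [|apply deg_le_zpowS, Lfield_Lform]. unfold zV; lia. Qed.

Lemma summable_v_coefs : summable (fun i => scalS (aV i) (zpowS L0 (zV i - 1))).
Proof.
  apply (summable_of_deg_le (-3)). intros i. apply deg_le_scal.
  eapply deg_le_mono; [|apply deg_le_zpowS, Lfield_Lform]. unfold zV; lia.
Qed.

Lemma summable_v_chain_terms : summable (chain_term aV zV L0 Ls).
Proof.
  apply (summable_of_deg_le (-2)). intros i.
  rewrite (chain_term_scal _ _ _ _ 1) by (apply Lfield_Lform || apply deg_le_Ls).
  apply deg_le_scal. eapply deg_le_mono; [|apply deg_le_mulS; [apply deg_le_scal, deg_le_zpowS, Lfield_Lform|apply deg_le_Ls]].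
  unfold zV. lia.
Qed.

Lemma Mfield_chain_rule :
  subS (mulS Lk (dsF (Mfield N u v) x t s)) (mulS Ls (dkS (Mfield N u v x t s)))
  = mulS Lk (addS (scalS (INR N) I0) (dlogS L0 vs)).
Proof.
  pose proof (Lfield_Lform u x t s) as hL. pose proof deg_le_Ls as hs.
  assert (hk : deg_le 0 Lk) by apply (deg_le_dkS 1), hL.
  assert (hi : deg_le (-1) I0) by apply deg_le_invS, hL.
  pose proof deg_le_time_coefs as hTb. pose proof deg_le_v_coefs as hVb.
  pose proof (deg_le_chainS aT zT L0 Ls _ 1 hL hs hTb) as hcTs.
  pose proof (deg_le_chainS aT zT L0 Lk _ 0 hL hk hTb) as hcTk.
  pose proof (deg_le_chainS aV zV L0 Ls _ 1 hL hs hVb) as hcVs.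
  pose proof (deg_le_chainS aV zV L0 Lk _ 0 hL hk hVb) as hcVk.
  pose proof (deg_le_dlogS L0 vs hL) as hW.
  rewrite dsF_Mfield, dkS_Mfield. unfold Ms, Mk.
  rewrite <- (sumS_add (fun i => scalS (vs i) (zpowS L0 (zV i))) (chain_term aV zV L0 Ls))
    by (apply summable_dlogS_terms, hL || apply summable_v_chain_terms).
  fold (chainS aV zV L0 Ls). fold (dlogS L0 vs).
  assert (ET : mulS Lk (chainS aT zT L0 Ls) = mulS Ls (chainS aT zT L0 Lk))
    by (apply (mulS_chainS_comm _ _ _ _ _ (Z.of_nat K) 1 0); auto using summable_time_coefs).
  assert (EV : mulS Lk (chainS aV zV L0 Ls) = mulS Ls (chainS aV zV L0 Lk))
    by (apply (mulS_chainS_comm _ _ _ _ _ (-3) 1 0); auto using summable_v_coefs).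
  set (k := lser_of _ hk). set (l := lser_of _ hs). set (i := lser_of _ hi). set (w := lser_of _ hW).
  set (cTs := lser_of _ hcTs). set (cTk := lser_of _ hcTk).
  set (cVs := lser_of _ hcVs). set (cVk := lser_of _ hcVk).
  set (x0 := lser_of _ (deg_le_scal _ x _ (deg_le_zero 0))).
  assert (E1 : lmul k cTs = lmul l cTk) by (apply lser_eq; exact ET).
  assert (E2 : lmul k cVs = lmul l cVk) by (apply lser_eq; exact EV).
  assert (E : lsub (lmul k (ladd cTs (ladd lzero (ladd (ladd (lscal (INR N) i)
                     (lscal (INR N * s) (lopp (lmul (lmul i i) l)))) (ladd w cVs)))))
                   (lmul l (ladd cTk (ladd x0 (ladd (lscal (INR N * s) (lopp (lmul (lmul i i) k))) cVk))))
              = lmul k (ladd (lscal (INR N) i) w)).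
  { assert (Ex0 : x0 = lzero) by (apply lser_eq; extensionality j; simpl; unfold scalS, zeroS; ring).
    rewrite Ex0, !lscal_lconst.
    transitivity (ladd (lmul k (ladd (lmul (lconst (INR N)) i) w))
                       (ladd (lsub (lmul k cTs) (lmul l cTk)) (lsub (lmul k cVs) (lmul l cVk)))); [ring|].
    rewrite E1, E2. ring. }
  exact (f_equal lval E).
Qed.

End MfieldChainRule.

Lemma log_derivative_of_brackets (Lk Lx Ls Mk Mx Ms P Pk Px : lser) :
  lsub (lmul Lk Mx) (lmul Lx Mk) = lone ->
  lmul Ls P = lsub (lmul Pk Lx) (lmul Px Lk) ->
  lmul Ms P = lsub (lmul Pk Mx) (lmul Px Mk) ->
  Pk = lmul P (lsub (lmul Lk Ms) (lmul Ls Mk)).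
Proof.
  intros HLM HL HM.
  transitivity (lmul Pk (lsub (lmul Lk Mx) (lmul Lx Mk))); [rewrite HLM; ring|].
  transitivity (lsub (lmul Lk (lsub (lmul Pk Mx) (lmul Px Mk))) (lmul Mk (lsub (lmul Pk Lx) (lmul Px Lk))));
    [ring|].
  rewrite <- HL, <- HM. ring.
Qed.

Lemma dkS_Pfield N u v p x t s K : (forall n, regular (u n)) -> (forall n, regular (v n)) ->
  dNmKP_solution N u v p -> (forall n, (K < n)%nat -> t n = 0) ->
  dkS (Pfield N p x t s)
  = mulS (Pfield N p x t s)
      (mulS (dkS (Lfield u x t s))
         (addS (scalS (INR N) (invS (Lfield u x t s))) (dlogS (Lfield u x t s) (fun m => dsC (v (S m)) x t s)))).
Proof.
  intros hu hv Hsol hK. assert (ht : finsupp t) by (exists K; exact hK).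
  destruct (Hsol x t s ht) as (_ & _ & HLM & HLs & HMs & _). cbv zeta in HLM, HLs, HMs.
  unfold bracket in HLM, HLs, HMs. rewrite <- (Mfield_chain_rule N u v t K hK x s hu hv).
  pose proof (Lfield_Lform u x t s) as [hL _].
  assert (hM : forall x y, deg_le (Z.of_nat K) (Mfield N u v x t y)) by (intros; apply deg_le_Mfield, hK).
  pose proof (deg_le_Pfield N p x t s) as hP.
  set (Lk := lser_of _ (deg_le_dkS _ _ hL)).
  set (Lx := lser_of _ (deg_le_Derive (fun y => Lfield u y t s) 1 x (fun y => proj1 (Lfield_Lform u y t s)))).
  set (Ls := lser_of _ (deg_le_Derive (fun y => Lfield u x t y) 1 s (fun y => proj1 (Lfield_Lform u x t y)))).
  set (Mk := lser_of _ (deg_le_dkS _ _ (hM x s))).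
  set (Mx := lser_of _ (deg_le_Derive (fun y => Mfield N u v y t s) _ x (fun y => hM y s))).
  set (Ms := lser_of _ (deg_le_Derive (fun y => Mfield N u v x t y) _ s (hM x))).
  set (P := lser_of _ hP). set (Pk := lser_of _ (deg_le_dkS _ _ hP)).
  set (Px := lser_of _ (deg_le_Derive (fun y => Pfield N p y t s) _ x (fun y => deg_le_Pfield N p y t s))).
  refine (f_equal lval (log_derivative_of_brackets Lk Lx Ls Mk Mx Ms P Pk Px _ _ _));
    apply lser_eq; [exact HLM|exact HLs|exact HMs].
Qed.

Lemma top_coef_exists f B j : deg_le B f -> f j <> 0 -> exists d, f d <> 0 /\ deg_le d f.
Proof.
  intros hB hj. assert (hjB : (j <= B)%Z) by (destruct (Z_le_gt_dec j B); [auto|exfalso; apply hj, hB; lia]).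
  remember (Z.to_nat (B - j)) as n eqn:Hn. revert B hB hjB Hn.
  induction n as [|n IH]; intros B hB hjB Hn.
  - exists j. split; auto. eapply deg_le_mono; [|eauto]. lia.
  - destruct (Req_dec (f B) 0) as [h0|h0]; [|exists B; auto].
    apply (IH (B - 1)%Z); try lia. intros k hk.
    destruct (Z.eq_dec k B) as [->|]; [auto|apply hB; lia].
Qed.

(* If [P - Q] were nonzero, with top coefficient [r] in degree [d < B], the coefficient of
   [k^(B+d-1)] in [(P-Q)_k Q - Q_k (P-Q)] would be [(d - B) r <> 0]. *)
Lemma monic_eq_of_log_derivative P Q B : deg_le B P -> deg_le B Q -> P B = 1 -> Q B = 1 ->
  mulS (dkS P) Q = mulS (dkS Q) P -> P = Q.
Proof.
  intros hP hQ h1 h2 H. set (D := subS P Q).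
  assert (hD : deg_le (B - 1) D).
  { intros j hj. unfold D, subS. destruct (Z.eq_dec j B) as [->|]; [rewrite h1, h2; ring|].
    rewrite hP, hQ by lia. ring. }
  assert (HD : mulS (dkS D) Q = mulS (dkS Q) D).
  { unfold D. rewrite dkS_sub.
    set (p := lser_of _ hP). set (q := lser_of _ hQ).
    set (dp := lser_of _ (deg_le_dkS _ _ hP)). set (dq := lser_of _ (deg_le_dkS _ _ hQ)).
    assert (E0 : lmul dp q = lmul dq p) by (apply lser_eq; exact H).
    assert (E : lmul (lsub dp dq) q = lmul dq (lsub p q)).
    { transitivity (ladd (lsub (lmul dp q) (lmul dq p)) (lmul dq (lsub p q))); [ring|]. rewrite E0. ring. }
    exact (f_equal lval E). }
  extensionality j. destruct (Req_dec (D j) 0) as [e|e]; [unfold D, subS in e; lra|exfalso].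
  destruct (top_coef_exists D (B - 1) j hD e) as [d [hd hdD]].
  assert (hdB : (d <= B - 1)%Z) by (destruct (Z_le_gt_dec d (B - 1)); [auto|exfalso; apply hd, hD; lia]).
  pose proof (f_equal (fun f => f (d - 1 + B)%Z) HD) as HH. simpl in HH.
  rewrite (mulS_top_coef (d - 1) B _ _ (deg_le_dkS _ _ hdD) hQ) in HH.
  replace (d - 1 + B)%Z with (B - 1 + d)%Z in HH by lia.
  rewrite (mulS_top_coef (B - 1) d _ _ (deg_le_dkS _ _ hQ) hdD) in HH.
  unfold dkS in HH. replace (d - 1 + 1)%Z with d in HH by lia. replace (B - 1 + 1)%Z with B in HH by lia.
  rewrite h2 in HH. apply hd.
  assert (IZR d <> IZR B) by (intros E; apply eq_IZR in E; lia).
  apply (Rmult_eq_reg_l (IZR d - IZR B)); [lra|lra].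
Qed.

Theorem mainTheorem4 (N : nat) (u v p : nat -> coef) :
  (0 < N)%nat ->
  (forall n, regular (u n)) -> (forall n, regular (v n)) -> (forall n, regular (p n)) ->
  dNmKP_solution N u v p ->
  forall x t s, finsupp t ->
    Pfield N p x t s =
    mulS (powS (Lfield u x t s) N)
      (expS (sumS (fun m =>
         scalS (-1 / INR (S m) * dsC (v (S m)) x t s)
               (zpowS (Lfield u x t s) (- Z.of_nat (S m)))))).
Proof.
  intros hN hu hv _ Hsol x t s [K hK].
  set (L := Lfield u x t s). set (c := fun m => dsC (v (S m)) x t s).
  change (sumS _) with (logS L c).
  assert (hL : Lform L) by apply Lfield_Lform. pose proof hL as [hL1 _].
  destruct (powS_expS_monic L (logS L c) N hL (deg_le_logS L c hL)) as [hQ hQ1].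
  pose proof (deg_le_mulS _ _ _ _ (deg_le_dkS _ _ hL1)
    (deg_le_add _ _ _ (deg_le_scal _ (INR N) _ (deg_le_invS L hL))
      (deg_le_mono (-2) (-1) _ ltac:(lia) (deg_le_dlogS L c hL)))) as hH.
  apply (monic_eq_of_log_derivative _ _ (Z.of_nat N) (deg_le_Pfield N p x t s) hQ (Pfield_top_coef N p x t s) hQ1).
  rewrite (dkS_Pfield N u v p x t s K), (dkS_powS_expS_logS L N c) by auto.
  set (P := lser_of _ (deg_le_Pfield N p x t s)). set (Q := lser_of _ hQ). set (H := lser_of _ hH).
  exact (f_equal lval (ltac:(ring) : lmul (lmul P H) Q = lmul (lmul Q H) P)).
Qed.
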